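(* Let $L\in\mathrm{Gr}(\mathbb R^n,m)$ and let $(B,N)$ be its Goldman–Tucker partition. Then: (a) If $|||\cdot|||=\|\cdot\|_\infty$: $\sigma(L_B)=\nu(L_B)=\max_{x\in L\cap\mathbb R^n_+,\|x\|=1}\min_{i\in B}x_i$ and $\sigma(L_N)=\nu(L_N)=\max_{x\in L^\perp\cap\mathbb R^n_+,\|x\|=1}\min_{i\in N}x_i$. In particular, if also $\|\cdot\|=\|\cdot\|_1$: $\sigma(L_B)=\nu(L_B)=\max_{x\in L\cap\Delta_{n-1}}\min_{i\in B}x_i$ and $\sigma(L_N)=\nu(L_N)=\max_{x\in L^\perp\cap\Delta_{n-1}}\min_{i\in N}x_i$. (b) If $|||\cdot|||=\|\cdot\|_1$: $\sigma(L_B)=\nu(L_B)=\min_{i\in B}\max_{x\in L\cap\mathbb R^n_+,\|x\|=1}x_i$ and $\sigma(L_N)=\nu(L_N)=\min_{i\in N}\max_{x\in L^\perp\cap\mathbb R^n_+,\|x\|=1}x_i$. In particular, if also $\|\cdot\|=\|\cdot\|_1$: $\sigma(L_B)=\nu(L_B)=\min_{i\in B}\max_{x\in L\cap\Delta_{n-1}}x_i$ and $\sigma(L_N)=\nu(L_N)=\min_{i\in N}\max_{x\in L^\perp\cap\Delta_{n-1}}x_i$. (c) If $\|\cdot\|=|||\cdot|||=\|\cdot\|_2$: $\sigma(L_B)=\nu(L_B)=\min_{u\in\mathbb R^B_+\times\{0_N\},\|u\|_2=1}\max_{x\in L\cap\mathbb R^n_+,\|x\|_2=1}\langle u,x\rangle$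 and $\sigma(L_N)=\nu(L_N)=\min_{u\in\{0_B\}\times\mathbb R^N_+,\|u\|_2=1}\max_{x\in L^\perp\cap\mathbb R^n_+,\|x\|_2=1}\langle u,x\rangle$.
   Context: $V=\mathbb R^n$ with the dot product, $K=\mathbb R^n_+$; $\mathrm{Gr}(\mathbb R^n,m)$ is the set of $m$-dimensional subspaces ($1\le m<n$), $L^\perp$ the orthogonal complement; $\Delta_{n-1}:=\{x\in\mathbb R^n_+:\sum_ix_i=1\}$. For every $L\in\mathrm{Gr}(\mathbb R^n,m)$ there is a unique partition $B\cup N=\{1,\dots,n\}$ (the Goldman–Tucker partition) with $L\cap(\operatorname{int}\mathbb R^B_+\times\{0_N\})\neq\emptyset$ and $L^\perp\cap(\{0_B\}\times\operatorname{int}\mathbb R^N_+)\neq\emptyset$. Set $V_B:=\mathbb R^B\times\{0_N\}$, $K_B:=\mathbb R^B_+\times\{0_N\}$, $V_N:=\{0_B\}\times\mathbb R^N$, $K_N:=\{0_B\}\times\mathbb R^N_+$, $L_B:=L\cap V_B$, $L_N:=L^\perp\cap V_N$. For a coordinate subspace $V'\in\{V_B,V_N\}$ with cone $K'\in\{K_B,K_N\}$ and a subspace $L'\subseteq V'$ (with $L'\cap\operatorname{int}_{V'}K'\neq\emptyset$), the quantities are computed inside $V'$ (orthogonal complement, dual cone $K'^*=K'$, and norms restricted to $V'$, dual norms taken within $V'$): $\nu(L'):=\min\{\|u-y\|^*:u\in K',\ y\in L'^{\perp}\cap V',\ |||u|||^*=1\}$, and $\sigma(L'):=\min_{v\in K',|||v|||=1}\max_{x\in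 L',\|x\|\le1}\lambda_v(x)$ where $\lambda_v(x):=\sup\{t: x-tv\in K'\}$. Here $\|\cdot\|,|||\cdot|||$ are the specified norms on $\mathbb R^n$ and $\|u\|^*:=\max_{\|x\|=1}\langle u,x\rangle$, $|||u|||^*:=\max_{|||x|||=1}\langle u,x\rangle$. *)

From Stdlib Require Import Reals.
From mathcomp Require Import all_boot.

Set Implicit Arguments.
Unset Strict Implicit.
Unset Printing Implicit Defensive.

Local Open Scope R_scope.

Definition vec (n : nat) := 'I_n -> R.

Section Vec.
Variable n : nat.

Definition vzero : vec n := fun _ => 0.
Definition vadd (x y : vec n) : vec n := fun i => x i + y i.
Definition vsub (x y : vec n) : vec n := fun i => x i - y i.
Definition vscale (c : R) (x : vec n) : vec n := fun i => c * x i.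

Definition dot (x y : vec n) : R := \big[Rplus/0]_(i < n) (x i * y i).

Definition norm_inf (x : vec n) : R := \big[Rmax/0]_(i < n) Rabs (x i).
Definition norm_1 (x : vec n) : R := \big[Rplus/0]_(i < n) Rabs (x i).
Definition norm_2 (x : vec n) : R := sqrt (\big[Rplus/0]_(i < n) (x i * x i)).

Definition IsNorm (N : vec n -> R) : Prop :=
  (forall x, N x = 0 -> forall i, x i = 0) /\
  (forall c x, N (vscale c x) = Rabs c * N x) /\
  (forall x y, N (vadd x y) <= N x + N y).

Definition nonneg (x : vec n) : Prop := forall i, 0 <= x i.
Definition simplex (x : vec n) : Prop :=
  nonneg x /\ \big[Rplus/0]_(i < n) x i = 1.

Definition lincomb (m : nat) (c : 'I_m -> R) (b : 'I_m -> vec n) : vec n :=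
  fun i => \big[Rplus/0]_(j < m) (c j * b j i).

Definition InGr (L : vec n -> Prop) (m : nat) : Prop :=
  exists b : 'I_m -> vec n,
    (forall c : 'I_m -> R, (forall i, lincomb c b i = 0) -> forall j, c j = 0) /\
    (forall x, L x <-> exists c : 'I_m -> R, forall i, x i = lincomb c b i).

Definition perp (L : vec n -> Prop) : vec n -> Prop :=
  fun y => forall x, L x -> dot x y = 0.

Definition GoldmanTucker (L : vec n -> Prop) (B : 'I_n -> Prop) : Prop :=
  (exists x, L x /\ forall i, (B i -> 0 < x i) /\ (~ B i -> x i = 0)) /\
  (exists y, perp L y /\ forall i, (B i -> y i = 0) /\ (~ B i -> 0 < y i)).

(* coordinate subspaces and cones; for V_N, K_N use (fun i => ~ B i) *)
Definition Vcoord (B : 'I_n -> Prop) : vec n -> Prop :=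
  fun x => forall i, ~ B i -> x i = 0.
Definition Kcoord (B : 'I_n -> Prop) : vec n -> Prop :=
  fun x => Vcoord B x /\ forall i, B i -> 0 <= x i.

Definition compl (B : 'I_n -> Prop) : 'I_n -> Prop := fun i => ~ B i.

Definition LB (L : vec n -> Prop) (B : 'I_n -> Prop) : vec n -> Prop :=
  fun x => L x /\ Vcoord B x.
Definition LN (L : vec n -> Prop) (B : 'I_n -> Prop) : vec n -> Prop :=
  fun x => perp L x /\ Vcoord (compl B) x.

End Vec.

Definition IsMax (P : R -> Prop) (m : R) : Prop := P m /\ forall y, P y -> y <= m.
Definition IsMin (P : R -> Prop) (m : R) : Prop := P m /\ forall y, P y -> m <= y.

Section Quantities.
Variable n : nat.
(* V' : the ambient coordinate subspace, K' : its cone, L' : a subspace of V' *)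
Variables (V K Lp : vec n -> Prop).

Definition DualNormIs (N : vec n -> R) (u : vec n) (d : R) : Prop :=
  IsMax (fun a => exists x, V x /\ N x = 1 /\ a = dot u x) d.

Definition NuIs (Nn Nt : vec n -> R) (r : R) : Prop :=
  IsMin (fun a => exists u y,
            K u /\ V y /\ (forall x, Lp x -> dot x y = 0) /\
            DualNormIs Nt u 1 /\ DualNormIs Nn (vsub u y) a) r.

Definition LambdaIs (v x : vec n) (t : R) : Prop :=
  is_lub (fun s => K (vsub x (vscale s v))) t.

Definition SigmaIs (Nn Nt : vec n -> R) (r : R) : Prop :=
  IsMin (fun a => exists v, K v /\ Nt v = 1 /\
            IsMax (fun b => exists x, Lp x /\ Nn x <= 1 /\ LambdaIs v x b) a) r.

End Quantities.

(* Right-hand sides of the theorem, for a subspace M (L or L^⊥) and an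
   index set C (B or N). *)
Section RHS.
Variable n : nat.
Variables (M : vec n -> Prop) (C : 'I_n -> Prop).

Definition RhsMaxMin (Nn : vec n -> R) (r : R) : Prop :=
  IsMax (fun a => exists x, M x /\ nonneg x /\ Nn x = 1 /\
           IsMin (fun c => exists i, C i /\ c = x i) a) r.

Definition RhsMaxMinSimplex (r : R) : Prop :=
  IsMax (fun a => exists x, M x /\ simplex x /\
           IsMin (fun c => exists i, C i /\ c = x i) a) r.

Definition RhsMinMax (Nn : vec n -> R) (r : R) : Prop :=
  IsMin (fun a => exists i, C i /\
           IsMax (fun b => exists x, M x /\ nonneg x /\ Nn x = 1 /\ b = x i) a) r.

Definition RhsMinMaxSimplex (r : R) : Prop :=
  IsMin (fun a => exists i, C i /\
           IsMax (fun b => exists x, M x /\ simplex x /\ b = x i) a) r.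

Definition RhsL2 (r : R) : Prop :=
  IsMin (fun a => exists u, Kcoord C u /\ norm_2 u = 1 /\
           IsMax (fun b => exists x, M x /\ nonneg x /\ norm_2 x = 1 /\
                    b = dot u x) a) r.
End RHS.

(* On each side, the subspace L' of the coordinate space V' (L_B in V_B, L_N in V_N) contains a
   point that is positive on every coordinate of V', and by complementary slackness its
   nonnegative part is the nonnegative part of L (resp. L^perp); this identifies the right-hand
   sides.  In each case the common value r is attained by compactness: at a maximizer of min_C over
   the nonnegative unit sphere of L' (sup-norm), at the coordinatewise maximizers (1-norm), or at
   a minimizer u of the support function of the unit ball of L' over the unit sphere of K'
   (2-norm).  One suitable direction v (the indicator of C, a coordinate vector, or u) shows
   sigma <= r, and the optimal points give lambda_v(x) >= r for all v.  Pairing any feasible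
   (u, y) of nu with an optimal x gives nu >= r because y is orthogonal to x; conversely a
   finite-dimensional Hahn-Banach argument separates L' from the points dominating v and yields
   u in K' and y in L'^perp with ||u - y||^* <= r. *)

From Pilot Require Import Defs.
From Stdlib Require Import Reals Lra Classical ClassicalEpsilon FunctionalExtensionality.
From mathcomp Require Import all_boot.
From mathcomp Require all_order all_algebra all_classical all_reals all_analysis Rstruct Rstruct_topology.
From mathcomp Require Import Rstruct.

Set Implicit Arguments.
Unset Strict Implicit.
Unset Printing Implicit Defensive.
Local Open Scope R_scope.

Section Sums.
Variable n : nat.
Implicit Types F G : 'I_n -> R.

Lemma Rsum_le F G : (forall i, F i <= G i) ->
  \big[Rplus/0]_(i < n) F i <= \big[Rplus/0]_(i < n) G i.
Proof. by move=> H; elim/big_ind2: _ => //; [lra | move=> *; lra]. Qed.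

Lemma Rsum_ge0 F : (forall i, 0 <= F i) -> 0 <= \big[Rplus/0]_(i < n) F i.
Proof. by move=> H; elim/big_ind: _ => //; [lra | move=> *; lra]. Qed.

Lemma Rsum_only F j : (forall i, i <> j -> F i = 0) -> \big[Rplus/0]_(i < n) F i = F j.
Proof. by move=> H; rewrite (bigD1 j) //= big1 ?Rplus_0_r // => i /eqP; auto. Qed.

Lemma Rsum_ge_term F j : (forall i, 0 <= F i) -> F j <= \big[Rplus/0]_(i < n) F i.
Proof.
move=> H; rewrite (bigD1 j) //=.
have : 0 <= \big[Rplus/0]_(i < n | i != j) F i by elim/big_ind: _ => //; [lra | move=> *; lra].
by move=> H0; apply: (Rle_trans _ (F j + 0)); [lra | apply: Rplus_le_compat_l].
Qed.

Lemma Rsum_eq0 F : (forall i, 0 <= F i) -> \big[Rplus/0]_(i < n) F i = 0 -> forall i, F i = 0.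
Proof. by move=> H E i; have := Rsum_ge_term i H; rewrite E; have := H i; lra. Qed.

Lemma RsumB F G : \big[Rplus/0]_(i < n) (F i - G i) =
  \big[Rplus/0]_(i < n) F i - \big[Rplus/0]_(i < n) G i.
Proof. by elim/big_rec3: _ => [|i a b c _ ->]; ring. Qed.

Lemma Rsum_abs_le F : Rabs (\big[Rplus/0]_(i < n) F i) <= \big[Rplus/0]_(i < n) Rabs (F i).
Proof.
apply: (big_ind2 (fun a b => Rabs a <= b)); first by rewrite Rabs_R0; lra.
  by move=> a b c e h1 h2; have := Rabs_triang a c; lra.
by move=> i _; lra.
Qed.

End Sums.

Section DotProduct.
Variable n : nat.
Implicit Types x y z : vec n.

Lemma vec_ext x y : (forall i, x i = y i) -> x = y.
Proof. exact: functional_extensionality. Qed.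

Lemma dotC x y : dot x y = dot y x.
Proof. by apply: eq_bigr => i _; rewrite Rmult_comm. Qed.

Lemma dotDl x y z : dot (vadd x y) z = dot x z + dot y z.
Proof. by rewrite /dot -big_split; apply: eq_bigr => i _; rewrite /vadd /=; ring. Qed.

Lemma dotZl c x y : dot (vscale c x) y = c * dot x y.
Proof. by rewrite /dot big_distrr; apply: eq_bigr => i _; rewrite /vscale /=; ring. Qed.

Lemma dotBl x y z : dot (vsub x y) z = dot x z - dot y z.
Proof.
have -> : vsub x y = vadd x (vscale (-1) y) by apply: vec_ext => i; rewrite /vsub /vadd /vscale; ring.
by rewrite dotDl dotZl; ring.
Qed.

Lemma dotDr x y z : dot z (vadd x y) = dot z x + dot z y.
Proof. by rewrite dotC dotDl !(dotC z). Qed.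

Lemma dotZr c x y : dot y (vscale c x) = c * dot y x.
Proof. by rewrite dotC dotZl dotC. Qed.

Lemma dotBr x y z : dot z (vsub x y) = dot z x - dot z y.
Proof. by rewrite dotC dotBl !(dotC z). Qed.

Lemma dot0r x : dot x (@vzero n) = 0.
Proof. by rewrite /dot big1 // => i _; rewrite /vzero; ring. Qed.

Lemma dot0l x : dot (@vzero n) x = 0.
Proof. by rewrite dotC dot0r. Qed.

Lemma dot_nonneg x y : Defs.nonneg x -> Defs.nonneg y -> 0 <= dot x y.
Proof. by move=> nx ny; apply: Rsum_ge0 => i; apply: Rmult_le_pos. Qed.

Lemma dot_nonneg_eq0 x y : Defs.nonneg x -> Defs.nonneg y -> dot x y = 0 ->
  forall i, 0 < y i -> x i = 0.
Proof.
move=> nx ny E i yi.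
have := Rsum_eq0 (F := fun k => x k * y k) (fun k => Rmult_le_pos _ _ (nx k) (ny k)) E i.
by have := nx i; nra.
Qed.

Definition unitv (j : 'I_n) : vec n := fun i => if i == j then 1 else 0.

Lemma dot_unitv x j : dot x (unitv j) = x j.
Proof.
rewrite /dot (Rsum_only (j := j)) /unitv ?eqxx; first ring.
by move=> i /eqP /negbTE ->; ring.
Qed.

Definition vsum (r : seq 'I_n) (f : 'I_n -> vec n) : vec n :=
  fun i => \big[Rplus/0]_(j <- r) f j i.

Lemma vsum_unitv x : x = vsum (index_enum 'I_n) (fun j => vscale (x j) (unitv j)).
Proof.
apply: vec_ext => i; rewrite /vsum /vscale /unitv.
rewrite -/(\big[Rplus/0]_(j < n) (x j * (if i == j then 1 else 0))).
rewrite (Rsum_only (j := i)) ?eqxx ?Rmult_1_r // => j /eqP.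
by rewrite eq_sym => /negbTE ->; ring.
Qed.

End DotProduct.

Section SupNorm.
Variable n : nat.
Implicit Types x y : vec n.

Lemma norm_inf_ge x i : Rabs (x i) <= norm_inf x.
Proof.
rewrite /norm_inf; have : i \in index_enum 'I_n by rewrite mem_index_enum.
elim: (index_enum 'I_n) => [|a r IH] //=.
rewrite big_cons in_cons => /orP [/eqP <-|/IH H]; first exact: Rmax_l.
exact: Rle_trans H (Rmax_r _ _).
Qed.

Lemma norm_inf_le x t : 0 <= t -> (forall i, Rabs (x i) <= t) -> norm_inf x <= t.
Proof. by move=> t0 H; rewrite /norm_inf; elim/big_ind: _ => // a b; apply: Rmax_lub. Qed.

Lemma norm_inf_ge0 x : 0 <= norm_inf x.
Proof.
rewrite /norm_inf; elim/big_ind: _ => //; first lra.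
  by move=> a b Ha _; apply: Rle_trans Ha (Rmax_l _ _).
by move=> i _; apply: Rabs_pos.
Qed.

Lemma norm_inf_eq0_or_attained x : norm_inf x = 0 \/ exists i, norm_inf x = Rabs (x i).
Proof.
rewrite /norm_inf; elim/big_ind: _ => //; first by left.
  move=> a b [->|[i ->]] [->|[j ->]].
  - by left; rewrite Rmax_left; lra.
  - by right; exists j; rewrite Rmax_right //; apply: Rabs_pos.
  - by right; exists i; rewrite Rmax_left //; apply: Rabs_pos.
  - by right; rewrite /Rmax; case: Rle_dec => _; [exists j | exists i].
by move=> i _; right; exists i.
Qed.

Lemma norm_inf_attained (i0 : 'I_n) x : exists i, norm_inf x = Rabs (x i).
Proof.
case: (norm_inf_eq0_or_attained x) => // H; exists i0; rewrite H.
by have := norm_inf_ge x i0; rewrite H; have := Rabs_pos (x i0); lra.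
Qed.

Lemma norm_inf_unitv (j : 'I_n) : norm_inf (unitv j) = 1.
Proof.
apply: Rle_antisym; last by have := norm_inf_ge (unitv j) j; rewrite /unitv eqxx Rabs_R1.
apply: norm_inf_le => [|i]; first lra.
by rewrite /unitv; case: (i == j); rewrite ?Rabs_R1 ?Rabs_R0; lra.
Qed.

Lemma norm_inf_dist x y d : 0 <= d -> (forall i, Rabs (y i - x i) <= d) ->
  Rabs (norm_inf y - norm_inf x) <= d.
Proof.
move=> d0 H.
have H1 : norm_inf y <= norm_inf x + d.
  apply: norm_inf_le => [|i]; first by have := norm_inf_ge0 x; lra.
  by have := H i; have := norm_inf_ge x i; have := Rabs_triang_inv (y i) (x i); lra.
have H2 : norm_inf x <= norm_inf y + d.
  apply: norm_inf_le => [|i]; first by have := norm_inf_ge0 y; lra.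
  have := H i; have := norm_inf_ge y i; have := Rabs_triang_inv (x i) (y i).
  by rewrite Rabs_minus_sym; lra.
by apply: Rabs_le; lra.
Qed.

Lemma norm_infZ t x : norm_inf (vscale t x) = Rabs t * norm_inf x.
Proof.
apply: Rle_antisym.
  apply: norm_inf_le => [|i]; first by apply: Rmult_le_pos; [apply: Rabs_pos | apply: norm_inf_ge0].
  by rewrite /vscale Rabs_mult; apply: Rmult_le_compat_l; [apply: Rabs_pos | apply: norm_inf_ge].
case: (norm_inf_eq0_or_attained x) => [->|[i ->]].
  by rewrite Rmult_0_r; apply: norm_inf_ge0.
by have := norm_inf_ge (vscale t x) i; rewrite /vscale Rabs_mult.
Qed.

End SupNorm.

(** * Compactness *)

Section Regularity.
Variable n : nat.

(* Both notions are phrased coordinatewise, i.e. for the sup-norm distance. *)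
Definition Lipschitz (f : vec n -> R) := exists k, forall x y d, 0 <= d ->
  (forall i, Rabs (y i - x i) <= d) -> Rabs (f y - f x) <= k * d.

Definition approx_closed (S : vec n -> Prop) := forall x,
  (forall eps, 0 < eps -> exists y, S y /\ forall i, Rabs (y i - x i) < eps) -> S x.

End Regularity.

Module Compactness.
Import all_order all_algebra all_classical all_reals all_analysis Rstruct_topology.
Import Order.TTheory GRing.Theory Num.Theory.
Import numFieldNormedType.Exports.
Local Open Scope classical_set_scope.

Section EVT.
Variable k : nat.

Let vec_of (v : 'rV[R]_k) : vec k := fun i => v ord0 i.

Let vec_of_row (x : vec k) : vec_of (\row_j x j)%R = x.
Proof. by apply: funext => i; rewrite /vec_of mxE. Qed.

Let ball_coord (x y : 'rV[R]_k) e : ball x e y ->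
  forall i, Rlt (Rabs (y ord0 i - x ord0 i)) e.
Proof.
rewrite mx_norm_ball /ball_ => /= H i.
have : (`|(x - y) ord0 i| <= `|x - y|)%R.
  by rewrite /Num.norm /= mx_normrE; apply/bigmax_geP; right => /=; exists (ord0, i).
rewrite !mxE => H2; apply/RltP.
rewrite (_ : Rabs _ = `|x ord0 i - y ord0 i|%R); last by rewrite distrC.
exact: le_lt_trans H2 H.
Qed.

Lemma Lipschitz_max_attained (S : vec k -> Prop) (f : vec k -> R) :
  (exists x, S x) -> (exists M, forall x, S x -> forall i, Rle (Rabs (x i)) M) ->
  approx_closed S -> Lipschitz f -> exists x, S x /\ forall y, S y -> Rle (f y) (f x).
Proof.
move=> [x0 Sx0] [M HM] Hcl [Lc HL].
pose A := [set v : 'rV[R]_k | S (vec_of v)].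
have A0 : A !=set0 by exists (\row_j x0 j)%R; rewrite /A /= vec_of_row.
have Acl : closed A.
  rewrite closedE => p Hp; apply: contrapT => nAp; apply: Hp.
  have : ~ (forall eps, Rlt 0 eps -> exists y, S y /\ forall i, Rlt (Rabs (y i - vec_of p i)) eps).
    by move=> H; apply: nAp; apply: Hcl.
  move=> /existsNP [e /not_implyP [e0 He]].
  apply/nbhs_ballP; exists e; first by apply/RltP.
  by move=> v /ball_coord Hv Av; apply: He; exists (vec_of v).
have Acp : compact A.
  apply: (subclosed_compact Acl (@rV_compact _ _ (fun=> `[(- M)%R, M]%classic) _)).
    by move=> _; apply: segment_compact.
  move=> v Av i /=; have /RleP := HM _ Av i.
  by rewrite in_itv /= -ler_norml.
have Acont : {within A, continuous (f \o vec_of)}.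
  apply: continuous_subspaceT => x.
  apply/(@pseudometric_normed_Zmodule.cvgrPdist_lt _ R^o _ _ (nbhs_filter x)) => eps /RltP eps0.
  have {}eps0 : Rlt 0 eps := eps0.
  have Lc1 : Rlt 0 (Rabs Lc + 1) by have := Rabs_pos Lc; lra.
  pose d := Rdiv eps (Rabs Lc + 1).
  have d0 : Rlt 0 d by apply: Rdiv_lt_0_compat.
  apply/nbhs_ballP; exists d; first by apply/RltP.
  move=> t /ball_coord Ht /=; apply/RltP.
  have := HL _ _ _ (Rlt_le _ _ d0) (fun i => Rlt_le _ _ (Ht i)).
  rewrite (_ : `|_|%R = Rabs (f (vec_of t) - f (vec_of x))); last by rewrite distrC.
  move=> H2; apply: (Rle_lt_trans _ _ _ H2).
  apply: (Rle_lt_trans _ (Rabs Lc * d)); first by apply: Rmult_le_compat_r; [lra|apply: RRle_abs].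
  apply: (Rmult_lt_reg_r (Rabs Lc + 1)) => //.
  have -> : (Rabs Lc * d * (Rabs Lc + 1) = Rabs Lc * eps)%coqR by rewrite /d; field; lra.
  by have := Rabs_pos Lc; nra.
have [c Ac Hc] := EVT_max_rV A0 Acp Acont.
exists (vec_of c); split; first by move: Ac; rewrite inE.
move=> y Sy; have : (\row_j y j)%R \in A by rewrite inE /A /= vec_of_row.
by move=> /Hc /RleP; rewrite /= vec_of_row.
Qed.

End EVT.
End Compactness.
Export Compactness.

Section LipschitzCalculus.
Variable n : nat.
Implicit Types f g : vec n -> R.
Implicit Types S T : vec n -> Prop.

Lemma Lipschitz_const c : Lipschitz (fun _ : vec n => c).
Proof. by exists 0 => x y d _ _; rewrite Rminus_diag Rabs_R0; lra. Qed.

Lemma Lipschitz_coord i : Lipschitz (fun x : vec n => x i).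
Proof. by exists 1 => x y d _ H; rewrite Rmult_1_l. Qed.

Lemma Lipschitz_norm_inf : Lipschitz (@norm_inf n).
Proof. by exists 1 => x y d d0 H; rewrite Rmult_1_l; apply: norm_inf_dist. Qed.

Lemma LipschitzD f g : Lipschitz f -> Lipschitz g -> Lipschitz (fun x => f x + g x).
Proof.
move=> [a Ha] [b Hb]; exists (a + b) => x y d d0 H.
rewrite (_ : f y + g y - (f x + g x) = (f y - f x) + (g y - g x)); last by ring.
have := Ha _ _ _ d0 H; have := Hb _ _ _ d0 H; have := Rabs_triang (f y - f x) (g y - g x).
nra.
Qed.

Lemma LipschitzZ c f : Lipschitz f -> Lipschitz (fun x => c * f x).
Proof.
move=> [a Ha]; exists (Rabs c * a) => x y d d0 H.
rewrite -Rmult_minus_distr_l Rabs_mult Rmult_assoc.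
by apply: Rmult_le_compat_l; [apply: Rabs_pos | exact: Ha].
Qed.

Lemma LipschitzB f g : Lipschitz f -> Lipschitz g -> Lipschitz (fun x => f x - g x).
Proof.
move=> Hf Hg; have [a Ha] := LipschitzD Hf (LipschitzZ (-1) Hg).
exists a => x y d d0 H; have := Ha x y d d0 H.
by have -> : f y + -1 * g y - (f x + -1 * g x) = f y - g y - (f x - g x) by ring.
Qed.

Lemma Lipschitz_dot (w : vec n) : Lipschitz (fun x => dot w x).
Proof.
exists (\big[Rplus/0]_(i < n) Rabs (w i)) => x y d d0 H.
rewrite -dotBr /dot big_distrl /=.
apply: Rle_trans (Rsum_abs_le _) _; apply: Rsum_le => i.
by rewrite /vsub Rabs_mult; apply: Rmult_le_compat_l; [apply: Rabs_pos | exact: H].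
Qed.

Lemma approx_closed_nonpos f : Lipschitz f -> approx_closed (fun x => f x <= 0).
Proof.
move=> [a Ha] x H; apply: Rnot_lt_le => fx.
have a1 : 0 < Rabs a + 1 by have := Rabs_pos a; lra.
have e0 : 0 < f x / (Rabs a + 1) by apply: Rdiv_lt_0_compat.
have [y [fy Hy]] := H _ e0.
have := Ha x y (f x / (Rabs a + 1)) (Rlt_le _ _ e0) (fun i => Rlt_le _ _ (Hy i)).
have : a * (f x / (Rabs a + 1)) <= Rabs a * (f x / (Rabs a + 1)).
  by apply: Rmult_le_compat_r; [lra | apply: RRle_abs].
have : Rabs a * (f x / (Rabs a + 1)) < f x.
  apply: (Rmult_lt_reg_r (Rabs a + 1)) => //.
  have -> : Rabs a * (f x / (Rabs a + 1)) * (Rabs a + 1) = Rabs a * f x by field; lra.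
  by have := Rabs_pos a; nra.
by have := Rle_abs (-(f y - f x)); rewrite Rabs_Ropp; lra.
Qed.

Lemma approx_closed_and S T : approx_closed S -> approx_closed T ->
  approx_closed (fun x => S x /\ T x).
Proof.
by move=> H1 H2 x H; split; [apply: H1 | apply: H2] => e e0; have [y [[? ?] ?]] := H e e0; exists y.
Qed.

Lemma approx_closed_ext S T : (forall x, S x <-> T x) -> approx_closed S -> approx_closed T.
Proof.
move=> E H x Hx; apply/E; apply: H => e e0.
by have [y [Sy Hy]] := Hx e e0; exists y; split => //; apply/E.
Qed.

Lemma approx_closed_le f g : Lipschitz f -> Lipschitz g -> approx_closed (fun x => f x <= g x).
Proof.
by move=> Hf Hg; apply: approx_closed_ext (approx_closed_nonpos (LipschitzB Hf Hg)) => x; split; lra.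
Qed.

Lemma approx_closed_eq f g : Lipschitz f -> Lipschitz g -> approx_closed (fun x => f x = g x).
Proof.
move=> Hf Hg; apply: approx_closed_ext (approx_closed_and (approx_closed_le Hf Hg) (approx_closed_le Hg Hf)).
by move=> x; split; lra.
Qed.

Lemma approx_closed_all (I : Type) (S : I -> vec n -> Prop) :
  (forall i, approx_closed (S i)) -> approx_closed (fun x => forall i, S i x).
Proof. by move=> H x Hx i; apply: H => e e0; have [y [Sy Hy]] := Hx e e0; exists y. Qed.

Lemma approx_closed_imp (P : Prop) S : approx_closed S -> approx_closed (fun x => P -> S x).
Proof. by move=> H x Hx p; apply: H => e e0; have [y [Sy Hy]] := Hx e e0; exists y; auto. Qed.

Lemma Lipschitz_min_attained S f :
  (exists x, S x) -> (exists M, forall x, S x -> forall i, Rabs (x i) <= M) ->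
  approx_closed S -> Lipschitz f -> exists x, S x /\ forall y, S y -> f x <= f y.
Proof.
move=> H1 H2 H3 Hf; have [x [Sx Hx]] := Lipschitz_max_attained H1 H2 H3 (LipschitzZ (-1) Hf).
by exists x; split => // y Sy; have := Hx y Sy; lra.
Qed.

End LipschitzCalculus.

(** * Norms and a finite-dimensional Hahn-Banach theorem *)

Section Norms.
Variable n : nat.
Variable N : vec n -> R.
Hypothesis HN : IsNorm N.
Implicit Types x y : vec n.

Lemma normZ c x : N (vscale c x) = Rabs c * N x.
Proof. by case: HN => _ []. Qed.

Lemma normD x y : N (vadd x y) <= N x + N y.
Proof. by case: HN => _ []. Qed.

Lemma norm_eq0 x : N x = 0 -> forall i, x i = 0.
Proof. by case: HN => H _; apply: H. Qed.

Lemma norm0 : N (@vzero n) = 0.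
Proof.
have -> : @vzero n = vscale 0 (@vzero n) by apply: vec_ext => i; rewrite /vscale /vzero; ring.
by rewrite normZ Rabs_R0; ring.
Qed.

Lemma normN x : N (vscale (-1) x) = N x.
Proof. by rewrite normZ Rabs_Ropp Rabs_R1 Rmult_1_l. Qed.

Lemma norm_ge0 x : 0 <= N x.
Proof.
have := normD x (vscale (-1) x); rewrite normN.
have -> : vadd x (vscale (-1) x) = @vzero n by apply: vec_ext => i; rewrite /vadd /vscale /vzero; ring.
by rewrite norm0; lra.
Qed.

Lemma norm_gt0 x i : x i <> 0 -> 0 < N x.
Proof. by move=> H; case: (norm_ge0 x) => // /esym E; case: H; apply: norm_eq0. Qed.

Lemma norm_eq0_vzero x : N x = 0 -> x = @vzero n.
Proof. by move=> E; apply: vec_ext => i; apply: norm_eq0. Qed.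

Lemma norm_normalize x : 0 < N x -> N (vscale (/ N x) x) = 1.
Proof.
move=> Nx; rewrite normZ Rabs_pos_eq; first by field; lra.
by apply: Rlt_le; apply: Rinv_0_lt_compat.
Qed.

Lemma homogeneous_le (P : vec n -> Prop) (f : vec n -> R) c :
  (forall t x, 0 < t -> P x -> P (vscale t x)) ->
  (forall t x, 0 < t -> f (vscale t x) = t * f x) ->
  (forall x, P x -> N x = 1 -> f x <= c) -> forall x, P x -> 0 < N x -> f x <= c * N x.
Proof.
move=> HP Hf Hc x Px Nx.
have it : 0 < / N x by apply: Rinv_0_lt_compat.
have := Hc _ (HP _ _ it Px) (norm_normalize Nx); rewrite Hf // => h.
have := Rmult_le_compat_r (N x) _ _ (Rlt_le _ _ Nx) h.
by have -> : / N x * f x * N x = f x by field; lra.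
Qed.

Lemma norm_dist x y : Rabs (N y - N x) <= N (vsub y x).
Proof.
have E1 : y = vadd (vsub y x) x by apply: vec_ext => i; rewrite /vadd /vsub; ring.
have E2 : x = vadd (vscale (-1) (vsub y x)) y.
  by apply: vec_ext => i; rewrite /vadd /vsub /vscale; ring.
have h1 := normD (vsub y x) x; rewrite -E1 in h1.
have h2 := normD (vscale (-1) (vsub y x)) y; rewrite -E2 normN in h2.
by apply: Rabs_le; lra.
Qed.

Lemma norm_vsum r f : N (vsum r f) <= \big[Rplus/0]_(j <- r) N (f j).
Proof.
elim: r => [|a r IH].
  have -> : vsum [::] f = @vzero n by apply: vec_ext => i; rewrite /vsum big_nil.
  by rewrite big_nil norm0; lra.
have -> : vsum (a :: r) f = vadd (f a) (vsum r f).
  by apply: vec_ext => i; rewrite /vsum /vadd big_cons.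
by rewrite big_cons; have := normD (f a) (vsum r f); lra.
Qed.

Lemma norm_le_coordwise : exists k, forall x d, 0 <= d ->
  (forall i, Rabs (x i) <= d) -> N x <= k * d.
Proof.
exists (\big[Rplus/0]_(j < n) N (unitv j)) => x d d0 H; rewrite {1}(vsum_unitv x).
apply: Rle_trans (norm_vsum _ _) _; rewrite big_distrl /=; apply: Rsum_le => j.
by rewrite normZ Rmult_comm; apply: Rmult_le_compat_l; [apply: norm_ge0 | exact: H].
Qed.

Lemma Lipschitz_norm : Lipschitz N.
Proof.
have [k Hk] := norm_le_coordwise; exists k => x y d d0 H.
by apply: Rle_trans (norm_dist x y) _; apply: Hk.
Qed.

(* Minimize N over the sup-norm unit sphere. *)
Lemma coord_le_norm (i0 : 'I_n) : exists c, 0 < c /\ forall x i, c * Rabs (x i) <= N x.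
Proof.
pose S := fun x : vec n => norm_inf x = 1.
have [x0 [Sx0 Hx0]] : exists x, S x /\ forall y, S y -> N x <= N y.
  apply: Lipschitz_min_attained; last exact: Lipschitz_norm.
  - by exists (unitv i0); apply: norm_inf_unitv.
  - by exists 1 => x Sx i; rewrite -Sx; apply: norm_inf_ge.
  - by apply: approx_closed_eq; [apply: Lipschitz_norm_inf | apply: Lipschitz_const].
have c0 : 0 < N x0.
  have [i Hi] := norm_inf_attained i0 x0.
  by apply: (@norm_gt0 _ i) => E; move: Sx0; rewrite /S Hi E Rabs_R0; lra.
exists (N x0); split => // x i.
case: (norm_inf_ge0 x) => Hp; last first.
  by have := norm_inf_ge x i; rewrite -Hp => h; have := Rabs_pos (x i); have := norm_ge0 x; nra.
have it : 0 < / norm_inf x by apply: Rinv_0_lt_compat.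
have Sx : S (vscale (/ norm_inf x) x).
  by rewrite /S norm_infZ Rabs_pos_eq; [field; lra | lra].
have := Hx0 _ Sx; rewrite normZ Rabs_pos_eq; last lra.
move=> h; have h2 : N x0 * norm_inf x <= N x.
  have := Rmult_le_compat_r (norm_inf x) _ _ (Rlt_le _ _ Hp) h.
  by have -> : / norm_inf x * N x * norm_inf x = N x by field; lra.
by have := norm_inf_ge x i; nra.
Qed.

Lemma norm_ball_bounded (i0 : 'I_n) r : exists M, forall x, N x <= r -> forall i, Rabs (x i) <= M.
Proof.
have [c [c0 Hc]] := coord_le_norm i0.
exists (r / c) => x Hx i; have := Hc x i => h.
by apply: (Rmult_le_reg_l c) => //; field_simplify; lra.
Qed.

End Norms.

Section HahnBanach.
Variable n : nat.
(* [S z a] reads "a >= p z" for a sublinear functional p that may take the value -oo. *)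
Variable S : vec n -> R -> Prop.
Hypothesis S_total : forall z, exists a, S z a.
Hypothesis S_add : forall z w a b, S z a -> S w b -> S (vadd z w) (a + b).
Hypothesis S_scale : forall c z a, 0 < c -> S z a -> S (vscale c z) (c * a).
Hypothesis S_zero : forall a, S (@vzero n) a -> 0 <= a.

Definition supported_below (k : nat) (z : vec n) := forall i : 'I_n, (k <= i)%N -> z i = 0.

Section Step.
Variables (k : nat) (g : vec n) (e : vec n).
Hypothesis Hg : forall z a, supported_below k z -> S z a -> dot g z <= a.

Lemma coordinate_extension_value : exists c,
  (forall z a, supported_below k z -> S (vsub z e) a -> dot g z - a <= c) /\
  (forall z a, supported_below k z -> S (vadd z e) a -> c <= a - dot g z).
Proof.
pose A := fun t => exists z a, supported_below k z /\ S (vsub z e) a /\ t = dot g z - a.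
have Bnd : forall z' a', supported_below k z' -> S (vadd z' e) a' ->
    forall t, A t -> t <= a' - dot g z'.
  move=> z' a' Hz' Sz' t [z [a [Hz [Sz ->]]]].
  have := S_add Sz Sz'.
  have -> : vadd (vsub z e) (vadd z' e) = vadd z z' by apply: vec_ext => i; rewrite /vadd /vsub; ring.
  have hs : supported_below k (vadd z z') by move=> i Hi; rewrite /vadd Hz // Hz' //; ring.
  by move=> /(Hg hs); rewrite dotDr; lra.
have supp0 : supported_below k (@vzero n) by [].
have [a1 Sa1] := S_total (vadd (@vzero n) e).
have [a0 Sa0] := S_total (vsub (@vzero n) e).
have [c [Hc1 Hc2]] : {c | is_lub A c}.
  apply: completeness; first by exists (a1 - dot g (@vzero n)) => t; apply: (Bnd _ _ supp0 Sa1).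
  by exists (dot g (@vzero n) - a0), (@vzero n), a0.
exists c; split; first by move=> z a Hz Sz; apply: Hc1; exists z, a.
by move=> z a Hz Sz; apply: Hc2; apply: (Bnd _ _ Hz Sz).
Qed.

End Step.

Lemma hahn_banach_step k : (exists g, forall z a, supported_below k z -> S z a -> dot g z <= a) ->
  (exists g, forall z a, supported_below k.+1 z -> S z a -> dot g z <= a).
Proof.
move=> [g Hg]; case: (ltnP k n) => Hk; last first.
  exists g => z a Hz; apply: Hg => i Hi; exfalso.
  by have := ltn_ord i; rewrite ltnNge (leq_trans Hk Hi).
pose ek := Ordinal Hk; pose e := unitv ek.
have [c [Hlo Hhi]] := coordinate_extension_value e Hg.
exists (fun i => if i == ek then c else g i) => z a Hz Sz.
pose t := z ek; pose z0 := fun i => if i == ek then 0 else z i.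
have Hz0 : supported_below k z0.
  move=> i Hi; rewrite /z0; case: eqP => // Hne; apply: Hz.
  rewrite ltn_neqAle Hi andbT; apply/eqP => Heq; apply: Hne; apply: val_inj; by rewrite /= -Heq.
have Hsz0 : forall s, supported_below k (vscale s z0) by move=> s i Hi; rewrite /vscale Hz0 //; ring.
have Ez : z = vadd z0 (vscale t e).
  by apply: vec_ext => i; rewrite /vadd /vscale /z0 /e /unitv /t; case: eqP => [->|_]; ring.
have -> : dot (fun i => if i == ek then c else g i) z = dot g z0 + t * c.
  rewrite {1}Ez dotDr dotZr dot_unitv eqxx; congr (_ + _ * _).
  by apply: eq_bigr => i _; rewrite /z0; case: eqP => _; ring.
case: (Rtotal_order t 0) => [tn|[t0|tp]].
- have Ss := S_scale (c := / - t) (Rinv_0_lt_compat (- t) ltac:(lra)) Sz.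
  have Ev : vscale (/ - t) z = vsub (vscale (/ - t) z0) e.
    by rewrite Ez; apply: vec_ext => i; rewrite /vadd /vsub /vscale; field; lra.
  rewrite Ev in Ss; have := Hlo _ _ (Hsz0 _) Ss; rewrite dotZr => h.
  have : dot g z0 - a <= - t * c.
    have -> : dot g z0 - a = - t * (/ - t * dot g z0 - / - t * a) by field; lra.
    by apply: Rmult_le_compat_l; lra.
  lra.
- rewrite t0 Rmult_0_l Rplus_0_r; apply: Hg => //.
  by have <- : z = z0 by rewrite {1}Ez t0; apply: vec_ext => i; rewrite /vadd /vscale; ring.
- have Ss := S_scale (c := / t) (Rinv_0_lt_compat _ tp) Sz.
  have Ev : vscale (/ t) z = vadd (vscale (/ t) z0) e.
    by rewrite Ez; apply: vec_ext => i; rewrite /vadd /vscale; field; lra.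
  rewrite Ev in Ss; have := Hhi _ _ (Hsz0 _) Ss; rewrite dotZr => h.
  have : t * c <= a - dot g z0.
    have -> : a - dot g z0 = t * (/ t * a - / t * dot g z0) by field; lra.
    by apply: Rmult_le_compat_l; lra.
  lra.
Qed.

Lemma hahn_banach : exists g : vec n, forall z a, S z a -> dot g z <= a.
Proof.
have H : forall k, exists g, forall z a, supported_below k z -> S z a -> dot g z <= a.
  elim=> [|k IH]; last exact: hahn_banach_step.
  exists (@vzero n) => z a Hz Sz; rewrite dot0l; apply: S_zero.
  by have <- : z = @vzero n by apply: vec_ext => i; apply: Hz.
have [g Hg] := H n; exists g => z a Sz; apply: Hg => // i Hi.
by have := ltn_ord i; rewrite ltnNge Hi.
Qed.

End HahnBanach.

Section Subspaces.
Variable n : nat.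
Implicit Types (L : vec n -> Prop) (C : 'I_n -> Prop).

Definition is_subspace L := [/\ L (@vzero n),
  forall x y, L x -> L y -> L (vadd x y) & forall c x, L x -> L (vscale c x)].

Lemma InGr_subspace L m : InGr L m -> is_subspace L.
Proof.
move=> [b [_ HL]]; split.
- by apply/HL; exists (fun _ => 0) => i; rewrite /lincomb big1 // => j _; ring.
- move=> x y /HL [c Hc] /HL [c' Hc']; apply/HL; exists (vadd c c') => i.
  by rewrite /vadd Hc Hc' /lincomb -big_split; apply: eq_bigr => j _ /=; rewrite /vadd; ring.
- move=> k x /HL [c Hc]; apply/HL; exists (vscale k c) => i.
  by rewrite /vscale Hc /lincomb big_distrr; apply: eq_bigr => j _ /=; rewrite /vscale; ring.
Qed.

Lemma perp_subspace L : is_subspace (perp L).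
Proof.
split; first by move=> z _; rewrite dot0r.
  by move=> x y Px Py z Lz; rewrite dotDr Px // Py //; ring.
by move=> c x Px z Lz; rewrite dotZr Px //; ring.
Qed.

Lemma subspace_Vcoord L C : is_subspace L -> is_subspace (fun x => L x /\ Vcoord C x).
Proof.
case=> H0 HD HZ; split; first by split.
  by move=> x y [Lx Vx] [Ly Vy]; split; [exact: HD | move=> i nC; rewrite /vadd Vx // Vy //; ring].
by move=> c x [Lx Vx]; split; [exact: HZ | move=> i nC; rewrite /vscale Vx //; ring].
Qed.

Lemma perp_approx_closed L : approx_closed (perp L).
Proof.
apply: approx_closed_all => z; apply: approx_closed_imp.
by apply: approx_closed_eq; [apply: Lipschitz_dot | apply: Lipschitz_const].
Qed.

Lemma Vcoord_approx_closed C : approx_closed (Vcoord C).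
Proof.
apply: approx_closed_all => i; apply: approx_closed_imp.
by apply: approx_closed_eq; [apply: Lipschitz_coord | apply: Lipschitz_const].
Qed.

Lemma Kcoord_approx_closed C : approx_closed (Kcoord C).
Proof.
apply: approx_closed_and; first exact: Vcoord_approx_closed.
apply: approx_closed_all => i; apply: approx_closed_imp.
by apply: approx_closed_le; [apply: Lipschitz_const | apply: Lipschitz_coord].
Qed.

End Subspaces.

Section Span.
Variables (n m : nat) (b : 'I_m -> vec n).
Hypothesis b_free : forall c : 'I_m -> R, (forall i, lincomb c b i = 0) -> forall j, c j = 0.
Variable j0 : 'I_m.

Let Lb := \big[Rplus/0]_(i < n) \big[Rplus/0]_(j < m) Rabs (b j i).

Let Lb_ge0 : 0 <= Lb.
Proof. by apply: Rsum_ge0 => i; apply: Rsum_ge0 => j; apply: Rabs_pos. Qed.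

Lemma lincomb_dist (c c' : vec m) d : 0 <= d -> (forall j, Rabs (c' j - c j) <= d) ->
  forall i, Rabs (lincomb c' b i - lincomb c b i) <= Lb * d.
Proof.
move=> d0 H i.
have h1 : Rabs (lincomb c' b i - lincomb c b i) <= (\big[Rplus/0]_(j < m) Rabs (b j i)) * d.
  have -> : lincomb c' b i - lincomb c b i = \big[Rplus/0]_(j < m) ((c' j - c j) * b j i).
    by rewrite /lincomb -RsumB; apply: eq_bigr => j _; ring.
  rewrite big_distrl; apply: Rle_trans (Rsum_abs_le _) _; apply: Rsum_le => j /=.
  by rewrite Rabs_mult Rmult_comm; apply: Rmult_le_compat_l; [apply: Rabs_pos | exact: H].
apply: Rle_trans h1 _; apply: Rmult_le_compat_r => //.
exact: (Rsum_ge_term (F := fun i => \big[Rplus/0]_(j < m) Rabs (b j i)) i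
          (fun k => Rsum_ge0 (fun j => Rabs_pos _))).
Qed.

Lemma lincombZ t c : lincomb (vscale t c) b = vscale t (lincomb c b).
Proof. by apply: vec_ext => i; rewrite /lincomb /vscale big_distrr; apply: eq_bigr => j _ /=; ring. Qed.

(* Minimize the sup-norm of lincomb over the sup-norm unit sphere of coefficients. *)
Lemma lincomb_lower_bound : exists k, 0 < k /\ forall c, k * norm_inf c <= norm_inf (lincomb c b).
Proof.
have [c0 [Sc0 Hc0]] : exists c, norm_inf c = 1 /\
    forall c', norm_inf c' = 1 -> norm_inf (lincomb c b) <= norm_inf (lincomb c' b).
  apply: Lipschitz_min_attained.
  - by exists (unitv j0); apply: norm_inf_unitv.
  - by exists 1 => x Sx i; rewrite -Sx; apply: norm_inf_ge.
  - by apply: approx_closed_eq; [apply: Lipschitz_norm_inf | apply: Lipschitz_const].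
  - exists Lb => x y d d0 H; apply: norm_inf_dist; first exact: Rmult_le_pos Lb_ge0 d0.
    exact: lincomb_dist.
have k0 : 0 < norm_inf (lincomb c0 b).
  case: (norm_inf_ge0 (lincomb c0 b)) => // E; exfalso.
  have Z : forall i, lincomb c0 b i = 0.
    move=> i; have := norm_inf_ge (lincomb c0 b) i; rewrite -E => h.
    by have := Rabs_pos (lincomb c0 b i); case: (Rcase_abs (lincomb c0 b i)) => h3;
      [rewrite Rabs_left in h | rewrite Rabs_right in h]; lra.
  have Hz := b_free Z.
  have := norm_inf_le (x := c0) (Rle_refl 0) ltac:(by move=> j; rewrite Hz Rabs_R0; lra).
  lra.
exists (norm_inf (lincomb c0 b)); split => // c.
case: (norm_inf_ge0 c) => Hc; last by rewrite -Hc Rmult_0_r; apply: norm_inf_ge0.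
have := Hc0 (vscale (/ norm_inf c) c).
rewrite lincombZ !norm_infZ Rabs_pos_eq; last by apply: Rlt_le; apply: Rinv_0_lt_compat.
have -> : / norm_inf c * norm_inf c = 1 by field; lra.
move=> /(_ erefl) h; have := Rmult_le_compat_l (norm_inf c) _ _ (Rlt_le _ _ Hc) h.
have -> : norm_inf c * (/ norm_inf c * norm_inf (lincomb c b)) = norm_inf (lincomb c b).
  by field; lra.
lra.
Qed.

Lemma span_approx_closed : approx_closed (fun x => exists c, forall i, x i = lincomb c b i).
Proof.
move=> x Hx; have [k [k0 Hk]] := lincomb_lower_bound.
pose r := (norm_inf x + 1) / k.
pose Box := fun c : vec m => forall j, Rabs (c j) <= r.
have inBox : forall c, (forall i, Rabs (lincomb c b i - x i) < 1) -> Box c.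
  move=> c H1 j; apply: Rle_trans (norm_inf_ge c j) _.
  have : norm_inf (lincomb c b) <= norm_inf x + 1.
    have := norm_inf_dist (x := x) (y := lincomb c b) (d := 1) ltac:(lra) (fun i => Rlt_le _ _ (H1 i)).
    by have := Rle_abs (norm_inf (lincomb c b) - norm_inf x); lra.
  move=> h2; have h1 := Hk c; apply: (Rmult_le_reg_l k) => //.
  have -> : k * r = norm_inf x + 1 by rewrite /r; field; lra.
  lra.
pose G := fun c => norm_inf (vsub (lincomb c b) x).
have [cs [Bcs Hcs]] : exists c, Box c /\ forall c', Box c' -> G c <= G c'.
  apply: Lipschitz_min_attained.
  - by exists (@vzero m) => j; rewrite /vzero Rabs_R0; apply: Rmult_le_pos;
      [have := norm_inf_ge0 x; lra | apply: Rlt_le; apply: Rinv_0_lt_compat].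
  - by exists r.
  - apply: approx_closed_all => j; apply: approx_closed_le; last exact: Lipschitz_const.
    by exists 1 => c c' d _ H; rewrite Rmult_1_l; apply: Rle_trans (Rabs_triang_inv2 _ _) (H j).
  - exists Lb => c c' d d0 H; apply: norm_inf_dist; first exact: Rmult_le_pos Lb_ge0 d0.
    move=> i; rewrite /vsub (_ : _ - x i - _ = lincomb c' b i - lincomb c b i); last by ring.
    exact: lincomb_dist.
have G0 : G cs <= 0.
  apply: Rnot_lt_le => h.
  have e0 : 0 < Rmin (G cs / 2) 1 by apply: Rmin_pos; lra.
  have [y [[c Hy] Hyx]] := Hx _ e0.
  have Hc : forall i, Rabs (lincomb c b i - x i) < Rmin (G cs / 2) 1 by move=> i; rewrite -Hy.
  have := Hcs _ (inBox c (fun i => Rlt_le_trans _ _ _ (Hc i) (Rmin_r _ _))).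
  have : G c <= Rmin (G cs / 2) 1 by apply: norm_inf_le; [lra | move=> i; apply: Rlt_le; exact: Hc].
  by have := Rmin_l (G cs / 2) 1; lra.
exists cs => i; have := norm_inf_ge (vsub (lincomb cs b) x) i; rewrite -/(G cs) /vsub => h.
have := Rabs_pos (lincomb cs b i - x i).
by case: (Rcase_abs (lincomb cs b i - x i)) => h3; [rewrite Rabs_left in h | rewrite Rabs_right in h]; lra.
Qed.

End Span.

Lemma InGr_approx_closed n (L : vec n -> Prop) m : (1 <= m)%N -> InGr L m -> approx_closed L.
Proof.
move=> m1 [b [Hind HL]].
apply: approx_closed_ext (span_approx_closed Hind (Ordinal m1)) => x.
by split => /HL.
Qed.

Section ConcreteNorms.
Variable n : nat.
Implicit Types x y : vec n.

Lemma norm_1_IsNorm : IsNorm (@norm_1 n).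
Proof.
split; last split.
- move=> x E i; have := Rsum_eq0 (fun i => Rabs_pos (x i)) E i.
  by case: (Rcase_abs (x i)) => h2 h; [rewrite Rabs_left in h | rewrite Rabs_right in h]; lra.
- by move=> c x; rewrite /norm_1 big_distrr; apply: eq_bigr => i _ /=; rewrite /vscale Rabs_mult.
- move=> x y; rewrite /norm_1 -big_split; apply: Rsum_le => i /=; exact: Rabs_triang.
Qed.

Lemma norm_2_sq x : norm_2 x * norm_2 x = dot x x.
Proof. by rewrite /norm_2 sqrt_sqrt //; apply: Rsum_ge0 => i; nra. Qed.

Lemma norm_2_ge0 x : 0 <= norm_2 x.
Proof. exact: sqrt_pos. Qed.

Lemma norm_2_eq0 x : norm_2 x = 0 -> forall i, x i = 0.
Proof.
move=> E i; have E2 : dot x x = 0 by rewrite -norm_2_sq E; ring.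
by have := Rsum_eq0 (F := fun i => x i * x i) (fun i => ltac:(nra)) E2 i; nra.
Qed.

Lemma norm_2Z c x : norm_2 (vscale c x) = Rabs c * norm_2 x.
Proof.
rewrite /norm_2; have -> : \big[Rplus/0]_(i < n) (vscale c x i * vscale c x i) =
    (c * c) * \big[Rplus/0]_(i < n) (x i * x i).
  by rewrite big_distrr; apply: eq_bigr => i _ /=; rewrite /vscale; ring.
rewrite sqrt_mult; [|nra | apply: Rsum_ge0 => i; nra].
by rewrite -Rsqr_def (sqrt_Rsqr_abs c).
Qed.

(* Expand |x/|x| - y/|y||^2 >= 0. *)
Lemma cauchy_schwarz x y : dot x y <= norm_2 x * norm_2 y.
Proof.
case: (norm_2_ge0 x) => ax; last first.
  have -> : x = @vzero n by apply: vec_ext => i; apply: norm_2_eq0; rewrite -ax.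
  by rewrite dot0l; have := norm_2_ge0 y; have := norm_2_ge0 (@vzero n); nra.
case: (norm_2_ge0 y) => ay; last first.
  have -> : y = @vzero n by apply: vec_ext => i; apply: norm_2_eq0; rewrite -ay.
  by rewrite dot0r; have := norm_2_ge0 x; have := norm_2_ge0 (@vzero n); nra.
pose z := vsub (vscale (/ norm_2 x) x) (vscale (/ norm_2 y) y).
have E : dot z z = 2 - 2 * (/ norm_2 x * (/ norm_2 y * dot x y)).
  by rewrite /z dotBl !dotBr !dotZl !dotZr -!norm_2_sq (dotC y x); field; lra.
have : 0 <= dot z z by rewrite -norm_2_sq; apply: Rmult_le_pos; apply: norm_2_ge0.
rewrite E => H; have h2 : / norm_2 x * (/ norm_2 y * dot x y) <= 1 by lra.
have h : 0 < norm_2 x * norm_2 y by apply: Rmult_lt_0_compat.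
have := Rmult_le_compat_l _ _ _ (Rlt_le _ _ h) h2.
have -> : norm_2 x * norm_2 y * (/ norm_2 x * (/ norm_2 y * dot x y)) = dot x y by field; lra.
lra.
Qed.

Lemma norm_2_IsNorm : IsNorm (@norm_2 n).
Proof.
split; last split.
- exact: norm_2_eq0.
- exact: norm_2Z.
- move=> x y; have h := norm_2_sq (vadd x y).
  rewrite dotDl !dotDr (dotC y x) -!norm_2_sq in h.
  have := cauchy_schwarz x y; have := norm_2_ge0 x; have := norm_2_ge0 y.
  have := norm_2_ge0 (vadd x y); nra.
Qed.

End ConcreteNorms.

Lemma IsMax_unique P a b : IsMax P a -> IsMax P b -> a = b.
Proof. by move=> [Pa Ha] [Pb Hb]; apply: Rle_antisym; auto. Qed.

Lemma IsMin_unique P a b : IsMin P a -> IsMin P b -> a = b.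
Proof. by move=> [Pa Ha] [Pb Hb]; apply: Rle_antisym; auto. Qed.

Lemma IsMax_ext (P Q : R -> Prop) r : (forall a, P a <-> Q a) -> IsMax P r -> IsMax Q r.
Proof. by move=> E [Pr H]; split; [exact/E | move=> y /E; apply: H]. Qed.

Lemma IsMin_ext (P Q : R -> Prop) r : (forall a, P a <-> Q a) -> IsMin P r -> IsMin Q r.
Proof. by move=> E [Pr H]; split; [exact/E | move=> y /E; apply: H]. Qed.

Lemma is_lub_unique (E : R -> Prop) a b : is_lub E a -> is_lub E b -> a = b.
Proof. by move=> [Ha1 Ha2] [Hb1 Hb2]; apply: Rle_antisym; [apply: Ha2 | apply: Hb2]. Qed.

Section DominatedExtension.
Variable n : nat.
Variable N : vec n -> R.
Hypothesis HN : IsNorm N.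
Variable Lp : vec n -> Prop.
Hypothesis Lp_sub : is_subspace Lp.

Lemma dominated_extension w r : 0 <= r -> (forall x, Lp x -> dot w x <= r * N x) ->
  exists h, (forall x, Lp x -> dot h x = dot w x) /\ forall z, dot h z <= r * N z.
Proof.
move=> r0 Hw; case: Lp_sub => Lp0 LpD LpZ.
pose S := fun z a => exists x, Lp x /\ r * N (vsub z x) + dot w x <= a.
have [h Hh] : exists h : vec n, forall z a, S z a -> dot h z <= a.
  apply: hahn_banach.
  - by move=> z; exists (r * N (vsub z (@vzero n)) + dot w (@vzero n)), (@vzero n); split; [|lra].
  - move=> z z' a b [x [Lx Hx]] [x' [Lx' Hx']]; exists (vadd x x'); split; first exact: LpD.
    have -> : vsub (vadd z z') (vadd x x') = vadd (vsub z x) (vsub z' x').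
      by apply: vec_ext => i; rewrite /vsub /vadd; ring.
    by rewrite dotDr; have := normD HN (vsub z x) (vsub z' x'); nra.
  - move=> c z a c0 [x [Lx Hx]]; exists (vscale c x); split; first exact: LpZ.
    have -> : vsub (vscale c z) (vscale c x) = vscale c (vsub z x).
      by apply: vec_ext => i; rewrite /vsub /vscale; ring.
    by rewrite normZ // dotZr Rabs_pos_eq; [nra | lra].
  - move=> a [x [Lx Hx]].
    have E : vsub (@vzero n) x = vscale (-1) x by apply: vec_ext => i; rewrite /vsub /vscale /vzero; ring.
    rewrite E normN // in Hx.
    by have := Hw _ (LpZ (-1) _ Lx); rewrite dotZr normN //; lra.
have Sx : forall x, Lp x -> S x (dot w x).
  move=> x Lx; exists x; split => //.
  have -> : vsub x x = @vzero n by apply: vec_ext => i; rewrite /vsub /vzero; ring.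
  by rewrite norm0 //; lra.
exists h; split.
  move=> x Lx; apply: Rle_antisym; first exact: Hh (Sx _ Lx).
  by have := Hh _ _ (Sx _ (LpZ (-1) _ Lx)); rewrite !dotZr; lra.
move=> z; apply: Hh; exists (@vzero n); split => //.
have -> : vsub z (@vzero n) = z by apply: vec_ext => i; rewrite /vsub /vzero; ring.
by rewrite dot0r; lra.
Qed.

End DominatedExtension.

Section DualNorm.
Variable n : nat.
Variable N : vec n -> R.
Hypothesis HN : IsNorm N.
Variable C : 'I_n -> Prop.
Variable i0 : 'I_n.
Hypothesis Ci0 : C i0.

Lemma Vcoord_vscale c x : Vcoord C x -> Vcoord C (vscale c x).
Proof. by move=> Vx i nC; rewrite /vscale Vx //; ring. Qed.

Lemma Vcoord_unit : exists x, Vcoord C x /\ N x = 1.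
Proof.
have Ve : Vcoord C (unitv i0).
  by move=> i nC; rewrite /unitv; case: eqP => // Ei; rewrite Ei in nC.
have Ne : 0 < N (unitv i0) by apply: (@norm_gt0 _ _ HN _ i0); rewrite /unitv eqxx; lra.
by exists (vscale (/ N (unitv i0)) (unitv i0)); split; [exact: Vcoord_vscale | exact: norm_normalize].
Qed.

Lemma dual_norm_exists w : exists d, DualNormIs (Vcoord C) N w d.
Proof.
have [M HM] := norm_ball_bounded HN i0 1.
have [x [[Vx Nx] Hx]] : exists x, (Vcoord C x /\ N x = 1) /\
    forall y, (Vcoord C y /\ N y = 1) -> dot w y <= dot w x.
  apply: Lipschitz_max_attained; last exact: Lipschitz_dot.
  - exact: Vcoord_unit.
  - by exists M => x [_ Nx]; apply: HM; lra.
  - apply: approx_closed_and; first exact: Vcoord_approx_closed.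
    by apply: approx_closed_eq; [exact: Lipschitz_norm | exact: Lipschitz_const].
exists (dot w x); split; first by exists x.
by move=> a [y [Vy [Ny ->]]]; apply: Hx.
Qed.

Lemma dual_norm_le w d x : DualNormIs (Vcoord C) N w d -> Vcoord C x -> dot w x <= d * N x.
Proof.
move=> [_ Hd] Vx; case: (norm_ge0 HN x) => Nx; last first.
  by rewrite (norm_eq0_vzero HN (esym Nx)) dot0r norm0 //; lra.
apply: (homogeneous_le HN (P := Vcoord C)) => //.
- by move=> t y _; exact: Vcoord_vscale.
- by move=> t y _; rewrite dotZr.
- by move=> y Vy Ny; apply: Hd; exists y.
Qed.

Lemma dual_norm_ge0 w d : DualNormIs (Vcoord C) N w d -> 0 <= d.
Proof.
move=> Hd; have [x [Vx Nx]] := Vcoord_unit.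
have h1 := dual_norm_le Hd Vx; have h2 := dual_norm_le Hd (Vcoord_vscale (-1) Vx).
by rewrite dotZr normN // Nx in h2; rewrite Nx in h1; lra.
Qed.

Lemma dual_norm_least w d r : DualNormIs (Vcoord C) N w d ->
  (forall z, Vcoord C z -> dot w z <= r * N z) -> d <= r.
Proof. by move=> [[y [Vy [Ny ->]]] _] H; have := H y Vy; rewrite Ny; lra. Qed.

Lemma exists_min_on (h : 'I_n -> R) : exists j, C j /\ forall i, C i -> h j <= h i.
Proof.
suff [j [_ [Cj Hj]]] : exists j, j \in index_enum 'I_n /\ C j /\
    forall i, i \in index_enum 'I_n -> C i -> h j <= h i.
  by exists j; split => // i Ci; apply: Hj => //; rewrite mem_index_enum.
have : exists i, i \in index_enum 'I_n /\ C i by exists i0; rewrite mem_index_enum.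
elim: (index_enum 'I_n) => [|a r IH] [i [Hi Ci]] //.
have Hcons : forall j, j \in r -> j \in a :: r by move=> j jr; rewrite in_cons jr orbT.
case: (classic (exists i, i \in r /\ C i)) => [/IH [j [jr [Cj Hj]]]|Hr].
  case: (classic (C a /\ h a <= h j)) => [[Ca Hl]|Hn].
    exists a; split; first by rewrite in_cons eqxx.
    split => // k; rewrite in_cons => /orP [/eqP -> //|kr Ck]; first by lra.
    by have := Hj k kr Ck; lra.
  exists j; split; first exact: Hcons.
  split => // k; rewrite in_cons => /orP [/eqP -> Ck|]; last exact: Hj.
  by apply: Rnot_lt_le => hl; apply: Hn; split => //; lra.
have Ca : C a.
  move: Hi; rewrite in_cons => /orP [/eqP <- //|ir]; by case: Hr; exists i.
exists a; split; first by rewrite in_cons eqxx.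
split => // k; rewrite in_cons => /orP [/eqP -> _|kr Ck]; first lra.
by case: Hr; exists k.
Qed.

Lemma exists_max_on (h : 'I_n -> R) : exists j, C j /\ forall i, C i -> h i <= h j.
Proof.
have [j [Cj Hj]] := exists_min_on (fun i => - h i).
by exists j; split => // i Ci; have := Hj i Ci; lra.
Qed.

End DualNorm.

(** * One side of the partition *)

(* [C], [Lp], [M] stand for [B], [L_B], [L] or for [N], [L_N], [L^perp]; [p] is the
   Goldman-Tucker witness, positive on [C]. *)
Section Side.
Variable n : nat.
Variable N : vec n -> R.
Hypothesis HN : IsNorm N.
Variable C : 'I_n -> Prop.
Variable i0 : 'I_n.
Hypothesis Ci0 : C i0.
Variable Lp : vec n -> Prop.
Hypothesis Lp_sub : is_subspace Lp.
Hypothesis Lp_V : forall x, Lp x -> Vcoord C x.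
Hypothesis Lp_closed : approx_closed Lp.
Variable p : vec n.
Hypothesis Lp_p : Lp p.
Hypothesis p_pos : forall i, C i -> 0 < p i.

Let Lp0 : Lp (@vzero n). Proof. by case: Lp_sub. Qed.
Let LpD x y : Lp x -> Lp y -> Lp (vadd x y). Proof. by case: Lp_sub => _ H _; apply: H. Qed.
Let LpZ c x : Lp x -> Lp (vscale c x). Proof. by case: Lp_sub => _ _; apply. Qed.

Definition restrictC (g : vec n) : vec n :=
  fun i => if excluded_middle_informative (C i) then g i else 0.

Lemma restrictC_Vcoord g : Vcoord C (restrictC g).
Proof. by move=> i nC; rewrite /restrictC; case: excluded_middle_informative. Qed.

Lemma dot_restrictC g z : Vcoord C z -> dot (restrictC g) z = dot g z.
Proof.
move=> Vz; apply: eq_bigr => i _; rewrite /restrictC.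
by case: excluded_middle_informative => // nC; rewrite Vz //; ring.
Qed.

Definition indC : vec n := fun i => if excluded_middle_informative (C i) then 1 else 0.

Lemma indC_Kcoord : Kcoord C indC.
Proof.
split; first by move=> i nC; rewrite /indC; case: excluded_middle_informative.
by move=> i Ci; rewrite /indC; case: excluded_middle_informative => /= _; lra.
Qed.

Lemma indC_C i : C i -> indC i = 1.
Proof. by move=> Ci; rewrite /indC; case: excluded_middle_informative. Qed.

Lemma norm_inf_indC : norm_inf indC = 1.
Proof.
apply: Rle_antisym; last by have := norm_inf_ge indC i0; rewrite indC_C // Rabs_R1.
apply: norm_inf_le => [|i]; first lra.
by rewrite /indC; case: excluded_middle_informative => _ /=; rewrite ?Rabs_R1 ?Rabs_R0; lra.
Qed.

Lemma sum_Vcoord u : Vcoord C u -> \big[Rplus/0]_(i < n) u i = dot u indC.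
Proof.
move=> Vu; apply: eq_bigr => i _; rewrite /indC.
by case: excluded_middle_informative => Ci /=; [ring | rewrite Vu //; ring].
Qed.

Lemma Kcoord_nonneg x : Kcoord C x -> Defs.nonneg x.
Proof. by move=> [Vx Hx] i; case: (classic (C i)) => Ci; [apply: Hx | rewrite Vx //; lra]. Qed.

Lemma Lp_Kcoord x : Lp x -> Defs.nonneg x -> Kcoord C x.
Proof. by move=> Lx nx; split; [exact: Lp_V | move=> i _; apply: nx]. Qed.

Lemma KcoordZ c x : 0 <= c -> Kcoord C x -> Kcoord C (vscale c x).
Proof.
move=> c0 [Vx Kx]; split; first exact: Vcoord_vscale.
by move=> i Ci; apply: Rmult_le_pos => //; apply: Kx.
Qed.

Lemma unitv_Kcoord j : C j -> Kcoord C (unitv j).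
Proof.
move=> Cj; split; first by move=> i nC; rewrite /unitv; case: eqP => // E; rewrite E in nC.
by move=> i _; rewrite /unitv; case: (i == j); lra.
Qed.

Lemma Kcoord_pos_coord Nn u : IsNorm Nn -> Kcoord C u -> 0 < Nn u -> exists j, C j /\ 0 < u j.
Proof.
move=> HNn Ku Nu; apply: NNPP => H.
have E : u = @vzero n.
  apply: vec_ext => i; rewrite /vzero; case: (classic (C i)) => Ci; last exact: (proj1 Ku).
  by case: (proj2 Ku i Ci) => // h; case: H; exists i.
by rewrite E (norm0 HNn) in Nu; lra.
Qed.

Lemma dominated_by_p (z : vec n) : exists t, forall i, C i -> z i <= t * p i.
Proof.
have [j [Cj Hj]] := exists_min_on Ci0 p.
exists (\big[Rplus/0]_(i < n) Rabs (z i) / p j) => i Ci.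
have pj := p_pos Cj; have := Hj i Ci.
have := Rsum_ge_term (F := fun i => Rabs (z i)) i (fun i => Rabs_pos _).
have : 0 <= \big[Rplus/0]_(i < n) Rabs (z i) / p j.
  by apply: Rmult_le_pos; [apply: Rsum_ge0 => k; apply: Rabs_pos | apply: Rlt_le; apply: Rinv_0_lt_compat].
have : \big[Rplus/0]_(i < n) Rabs (z i) / p j * p j = \big[Rplus/0]_(i < n) Rabs (z i) by field; lra.
by have := Rle_abs (z i); nra.
Qed.

Lemma Lp_vsum r f : (forall j, Lp (f j)) -> Lp (vsum r f).
Proof.
move=> H; elim: r => [|a r IH].
  by have -> : vsum [::] f = @vzero n by apply: vec_ext => i; rewrite /vsum big_nil.
have -> : vsum (a :: r) f = vadd (f a) (vsum r f) by apply: vec_ext => i; rewrite /vsum /vadd big_cons.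
exact: LpD.
Qed.

Definition unit_cone x := Lp x /\ Kcoord C x /\ N x = 1.

Lemma unit_cone_normalize x : Lp x -> Kcoord C x -> 0 < N x -> unit_cone (vscale (/ N x) x).
Proof.
move=> Lx Kx Nx; split; first exact: LpZ.
split; last exact: norm_normalize.
by apply: KcoordZ => //; apply: Rlt_le; apply: Rinv_0_lt_compat.
Qed.

Lemma unit_cone_nonempty : exists x, unit_cone x.
Proof.
have Np : 0 < N p by apply: (norm_gt0 HN (i := i0)); have := p_pos Ci0; lra.
exists (vscale (/ N p) p); apply: unit_cone_normalize => //.
by apply: Lp_Kcoord => // i; case: (classic (C i)) => Ci; [apply: Rlt_le; exact: p_pos | rewrite Lp_V //; lra].
Qed.

Lemma unit_cone_bounded : exists M, forall x, unit_cone x -> forall i, Rabs (x i) <= M.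
Proof. by have [M HM] := norm_ball_bounded HN i0 1; exists M => x [_ [_ Nx]]; apply: HM; lra. Qed.

Lemma unit_cone_closed : approx_closed unit_cone.
Proof.
apply: approx_closed_and => //; apply: approx_closed_and; first exact: Kcoord_approx_closed.
by apply: approx_closed_eq; [exact: Lipschitz_norm | exact: Lipschitz_const].
Qed.

Lemma unit_cone_max f : Lipschitz f -> exists x, unit_cone x /\ forall y, unit_cone y -> f y <= f x.
Proof.
move=> Hf; apply: Lipschitz_max_attained => //;
  [exact: unit_cone_nonempty | exact: unit_cone_bounded | exact: unit_cone_closed].
Qed.

Variable M : vec n -> Prop.
Hypothesis HM : forall x, M x /\ Defs.nonneg x <-> Lp x /\ Defs.nonneg x.

Lemma unit_cone_M x : unit_cone x <-> M x /\ Defs.nonneg x /\ N x = 1.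
Proof.
split=> [[Lx [Kx Nx]]|[Mx [nx Nx]]].
  by have [Mx nx] := proj2 (HM x) (conj Lx (Kcoord_nonneg Kx)).
by have [Lx _] := proj1 (HM x) (conj Mx nx); split => //; split => //; apply: Lp_Kcoord.
Qed.

Lemma lambda_exists_ge (v x : vec n) t : Kcoord C (vsub x (vscale t v)) ->
  (exists j, C j /\ 0 < v j) -> exists b, LambdaIs (Kcoord C) v x b /\ t <= b.
Proof.
move=> Ht [j [Cj vj]].
have [b Hb] : {b | is_lub (fun s => Kcoord C (vsub x (vscale s v))) b}.
  apply: completeness; last by exists t.
  exists (x j / v j) => s [_ Hs]; have := Hs j Cj; rewrite /vsub /vscale => h.
  by apply: (Rmult_le_reg_r (v j)) => //; field_simplify; lra.
by exists b; split => //; case: Hb => Hb _; exact: Hb.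
Qed.

(* Since [y] is orthogonal to [x], [<u, x> = <u - y, x> <= ||u - y||^*]. *)
Lemma nu_value_ge x r u y a : Lp x -> N x = 1 -> r <= dot u x ->
  (forall z, Lp z -> dot z y = 0) -> DualNormIs (Vcoord C) N (vsub u y) a -> r <= a.
Proof.
move=> Lx Nx Hr Hy Ha.
by have := dual_norm_le HN Ha (Lp_V Lx); rewrite Nx Rmult_1_r dotBl (dotC y x) (Hy _ Lx); lra.
Qed.

(* Splitting [w / mu] into a part vanishing on [L'] and the restriction of a dominated extension. *)
Lemma nu_value_le w r mu : Kcoord C w -> 0 <= r -> 1 <= mu ->
  (forall x, Lp x -> dot w x <= r * N x) ->
  exists y d, Vcoord C y /\ (forall x, Lp x -> dot x y = 0) /\
    DualNormIs (Vcoord C) N (vsub (vscale (/ mu) w) y) d /\ d <= r.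
Proof.
move=> Kw r0 mu1 Hwl.
have [h [Hh1 Hh2]] := dominated_extension HN Lp_sub r0 Hwl.
have imu : 0 < / mu <= 1.
  by split; [apply: Rinv_0_lt_compat; lra | rewrite -Rinv_1; apply: Rinv_le_contravar; lra].
pose y := vscale (/ mu) (vsub w (restrictC h)).
have Vy : Vcoord C y.
  by move=> i nC; rewrite /y /vscale /vsub (proj1 Kw i nC) (restrictC_Vcoord h nC); ring.
have Hy : forall x, Lp x -> dot x y = 0.
  move=> x Lx; rewrite /y dotZr dotBr !(dotC x) dot_restrictC; last exact: Lp_V.
  by rewrite Hh1 //; ring.
have Euy : vsub (vscale (/ mu) w) y = vscale (/ mu) (restrictC h).
  by apply: vec_ext => i; rewrite /y /vscale /vsub; ring.
have [d Hd] := dual_norm_exists HN Ci0 (vsub (vscale (/ mu) w) y).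
exists y, d; do !split => //.
apply: (dual_norm_least Hd) => z Vz; rewrite Euy dotZl dot_restrictC //.
have := Hh2 z; have := norm_ge0 HN z; have := Rmult_le_pos _ _ r0 (norm_ge0 HN z); nra.
Qed.

(* Hahn-Banach applied to [p(z) = inf { r ||x|| - s : x in L', z + s v <= x on C }]. *)
Lemma separation_certificate v r : Vcoord C v -> 0 <= r ->
  (forall x s, Lp x -> 0 < s -> (forall i, C i -> s * v i <= x i) -> s <= r * N x) ->
  exists w, Kcoord C w /\ 1 <= dot w v /\ forall x, Lp x -> dot w x <= r * N x.
Proof.
move=> Vv r0 Hv.
pose S := fun z a => exists x, Lp x /\ exists s,
  (forall i, C i -> z i + s * v i <= x i) /\ r * N x - s <= a.
have [g Hg] : exists g : vec n, forall z a, S z a -> dot g z <= a.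
  apply: hahn_banach.
  - move=> z; have [t Ht] := dominated_by_p z.
    exists (r * N (vscale t p)), (vscale t p); split; first exact: LpZ.
    by exists 0; split; [move=> i Ci; rewrite /vscale; have := Ht i Ci; lra | lra].
  - move=> z w a b [x [Lx [s [Hs Ha]]]] [x' [Lx' [s' [Hs' Hb]]]].
    exists (vadd x x'); split; first exact: LpD.
    exists (s + s'); split; first by move=> i Ci; rewrite /vadd; have := Hs i Ci; have := Hs' i Ci; lra.
    by have := normD HN x x'; nra.
  - move=> c z a c0 [x [Lx [s [Hs Ha]]]]; exists (vscale c x); split; first exact: LpZ.
    exists (c * s); split; first by move=> i Ci; rewrite /vscale; have := Hs i Ci; nra.
    by rewrite normZ // Rabs_pos_eq; [nra | lra].
  - move=> a [x [Lx [s [Hs Ha]]]].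
    case: (Rle_or_lt s 0) => hs; first by have := norm_ge0 HN x; nra.
    have := Hv x s Lx hs (fun i Ci => ltac:(have := Hs i Ci; rewrite /vzero; lra)); lra.
have S0 : forall z, (forall i, C i -> z i <= 0) -> S z 0.
  by move=> z Hz; exists (@vzero n); split => //; exists 0; rewrite norm0 //;
    split; [move=> i Ci; rewrite /vzero; have := Hz i Ci; lra | lra].
exists (restrictC g); split; [split; first exact: restrictC_Vcoord | split].
- move=> j Cj; rewrite /restrictC; case: excluded_middle_informative => //= _.
  have Sj : S (vscale (-1) (unitv j)) 0.
    by apply: S0 => i _; rewrite /vscale /unitv; case: (i == j); lra.
  by have := Hg _ _ Sj; rewrite dotZr dot_unitv; lra.
- rewrite dot_restrictC //.
  have : S (vscale (-1) v) (-1).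
    exists (@vzero n); split => //; exists 1; rewrite norm0 //.
    by split; [move=> i Ci; rewrite /vscale /vzero; lra | lra].
  by move=> /Hg; rewrite dotZr; lra.
- move=> x Lx; rewrite dot_restrictC; last exact: Lp_V.
  by apply: Hg; exists x; split => //; exists 0; split; [move=> i _; lra | lra].
Qed.

Lemma SigmaIs_intro Nn Nt r v :
  Kcoord C v -> Nt v = 1 -> (exists x, Lp x /\ Nn x <= 1 /\ LambdaIs (Kcoord C) v x r) ->
  (forall x b, Lp x -> Nn x <= 1 -> LambdaIs (Kcoord C) v x b -> b <= r) ->
  (forall v, Kcoord C v -> Nt v = 1 ->
     exists x b, Lp x /\ Nn x <= 1 /\ LambdaIs (Kcoord C) v x b /\ r <= b) ->
  SigmaIs (Kcoord C) Lp Nn Nt r.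
Proof.
move=> Kv Nv [x [Lx [Nx Hx]]] Hub Hlb; split.
  exists v; split; [|split; [|split]] => //; first by exists x.
  by move=> b [x' [Lx' [Nx' Hb]]]; apply: Hub Hb.
move=> a [v' [Kv' [Nv' [_ Ha]]]].
have [x' [b [Lx' [Nx' [Hb rb]]]]] := Hlb v' Kv' Nv'.
have : b <= a by apply: Ha; exists x'.
lra.
Qed.

Lemma NuIs_intro Nn Nt r :
  (forall u y a, Kcoord C u -> (forall x, Lp x -> dot x y = 0) ->
     DualNormIs (Vcoord C) Nt u 1 -> DualNormIs (Vcoord C) Nn (vsub u y) a -> r <= a) ->
  (exists u y d, Kcoord C u /\ Vcoord C y /\ (forall x, Lp x -> dot x y = 0) /\
     DualNormIs (Vcoord C) Nt u 1 /\ DualNormIs (Vcoord C) Nn (vsub u y) d /\ d <= r) ->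
  NuIs (Vcoord C) (Kcoord C) Lp Nn Nt r.
Proof.
move=> Hlb [u [y [d [Ku [Vy [Hy [Hu [Hd dr]]]]]]]]; split.
  have -> : r = d by have := Hlb u y d Ku Hy Hu Hd; lra.
  by exists u, y; split; [|split; [|split; [|split]]].
by move=> a [u' [y' [Ku' [_ [Hy' [Hu' Ha]]]]]]; apply: Hlb Ha.
Qed.

Lemma minC_exists x : exists a, IsMin (fun c => exists i, C i /\ c = x i) a.
Proof.
have [j [Cj Hj]] := exists_min_on Ci0 x; exists (x j); split; first by exists j.
by move=> c [i [Ci ->]]; apply: Hj.
Qed.

Definition minC (x : vec n) : R := proj1_sig (constructive_indefinite_description _ (minC_exists x)).

Lemma minC_spec x : IsMin (fun c => exists i, C i /\ c = x i) (minC x).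
Proof. by rewrite /minC; case: constructive_indefinite_description. Qed.

Lemma minC_le x i : C i -> minC x <= x i.
Proof. by move=> Ci; case: (minC_spec x) => _; apply; exists i. Qed.

Lemma minC_attained x : exists i, C i /\ minC x = x i.
Proof. by case: (minC_spec x). Qed.

Lemma minC_ge x t : (forall i, C i -> t <= x i) -> t <= minC x.
Proof. by move=> H; have [i [Ci ->]] := minC_attained x; auto. Qed.

Lemma Lipschitz_minC : Lipschitz minC.
Proof.
exists 1 => x y d d0 H; rewrite Rmult_1_l; apply: Rabs_le; split.
- have [i [Ci ->]] := minC_attained y; have := minC_le x Ci; have := H i.
  by have := Rle_abs (- (y i - x i)); rewrite Rabs_Ropp; lra.
- have [i [Ci ->]] := minC_attained x; have := minC_le y Ci; have := H i.
  by have := Rle_abs (y i - x i); lra.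
Qed.

Lemma minCZ c x : 0 < c -> minC (vscale c x) = c * minC x.
Proof.
move=> c0; apply: Rle_antisym.
  by have [i [Ci ->]] := minC_attained x; have := minC_le (vscale c x) Ci; rewrite /vscale; lra.
apply: minC_ge => i Ci; rewrite /vscale; apply: Rmult_le_compat_l; [lra | exact: minC_le].
Qed.

Lemma dual_norm_inf_Kcoord u : Kcoord C u ->
  DualNormIs (Vcoord C) (@norm_inf n) u (\big[Rplus/0]_(i < n) u i).
Proof.
move=> [Vu Ku]; split.
  exists indC; split; first exact: (proj1 indC_Kcoord).
  by split; [exact: norm_inf_indC | rewrite sum_Vcoord].
move=> a [x [Vx [Nx ->]]]; apply: Rsum_le => i.
case: (classic (C i)) => Ci; last by rewrite Vu //; lra.
by have := norm_inf_ge x i; rewrite Nx => h; have := Rle_abs (x i); have := Ku i Ci; nra.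
Qed.

Section MaxMin.
Variable xs : vec n.
Hypothesis xs_unit : unit_cone xs.
Hypothesis xs_max : forall y, unit_cone y -> minC y <= minC xs.

Lemma maxmin_ge0 : 0 <= minC xs.
Proof. by have [j [Cj ->]] := minC_attained xs; case: xs_unit => _ [[_ Kx] _]; apply: Kx. Qed.

Lemma minC_le_maxmin x : Lp x -> minC x <= minC xs * N x.
Proof.
move=> Lx; case: (Rle_or_lt (minC x) 0) => h.
  by have := norm_ge0 HN x; have := maxmin_ge0; nra.
have Kx : Kcoord C x by split; [exact: Lp_V | move=> i Ci; have := minC_le x Ci; lra].
have [j [Cj Ej]] := minC_attained x.
apply: (homogeneous_le HN (P := fun x => Lp x /\ Kcoord C x)) => //.
- by move=> t y t0 [Ly Ky]; split; [exact: LpZ | apply: KcoordZ => //; lra].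
- by move=> t y t0; exact: minCZ.
- by move=> y [Ly Ky] Ny; apply: xs_max.
- by apply: (norm_gt0 HN (i := j)); lra.
Qed.

Lemma lambda_indC x : Lp x -> LambdaIs (Kcoord C) indC x (minC x).
Proof.
move=> Lx; split.
  move=> s [_ Hs]; have [j [Cj ->]] := minC_attained x.
  by have := Hs j Cj; rewrite /vsub /vscale indC_C //; lra.
move=> b Hb; apply: Hb; split.
  by move=> i nC; rewrite /vsub /vscale (Lp_V Lx nC) (proj1 indC_Kcoord i nC); ring.
by move=> i Ci; rewrite /vsub /vscale indC_C //; have := minC_le x Ci; lra.
Qed.

Lemma sigma_maxmin : SigmaIs (Kcoord C) Lp N (@norm_inf n) (minC xs).
Proof.
case: (xs_unit) => Lxs [Kxs Nxs].
apply: (SigmaIs_intro (v := indC)); [exact: indC_Kcoord | exact: norm_inf_indC | | |].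
- by exists xs; split => //; split; [lra | exact: lambda_indC].
- move=> x b Lx Nx Hb; rewrite (is_lub_unique Hb (lambda_indC Lx)).
  by have := minC_le_maxmin Lx; have := maxmin_ge0; have := norm_ge0 HN x; nra.
- move=> v Kv Nv.
  have [j Hj] := norm_inf_attained i0 v; rewrite Nv in Hj.
  have [b [Hb Rb]] : exists b, LambdaIs (Kcoord C) v xs b /\ minC xs <= b.
    apply: lambda_exists_ge; last first.
      exists j; case: (classic (C j)) => Cj; last by move: Hj; rewrite (proj1 Kv j Cj) Rabs_R0; lra.
      by split => //; rewrite Rabs_pos_eq in Hj; [lra | exact: (proj2 Kv)].
    split; first by move=> i nC; rewrite /vsub /vscale (Lp_V Lxs nC) (proj1 Kv i nC); ring.
    move=> i Ci; rewrite /vsub /vscale; have := minC_le xs Ci; have := maxmin_ge0.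
    have := norm_inf_ge v i; rewrite Nv Rabs_pos_eq; last exact: (proj2 Kv).
    by have := proj2 Kv i Ci; nra.
  by exists xs, b; split; [|split; [lra|split]].
Qed.

Lemma nu_maxmin : NuIs (Vcoord C) (Kcoord C) Lp N (@norm_inf n) (minC xs).
Proof.
case: (xs_unit) => Lxs [Kxs Nxs].
apply: NuIs_intro.
  move=> u y a Ku Hy Hu; apply: (nu_value_ge Lxs Nxs _ Hy).
  rewrite -[minC xs]Rmult_1_r (IsMax_unique Hu (dual_norm_inf_Kcoord Ku)) big_distrr.
  apply: Rsum_le => i /=; case: (classic (C i)) => Ci; last by rewrite (proj1 Ku i Ci); lra.
  by have := minC_le xs Ci; have := proj2 Ku i Ci; nra.
have [w [Kw [w1 Hw]]] : exists w, Kcoord C w /\ 1 <= dot w indC /\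
    forall x, Lp x -> dot w x <= minC xs * N x.
  apply: separation_certificate; [exact: (proj1 indC_Kcoord) | exact: maxmin_ge0 |].
  move=> x s Lx s0 Hs; apply: Rle_trans (minC_le_maxmin Lx).
  by apply: minC_ge => i Ci; have := Hs i Ci; rewrite indC_C //; lra.
rewrite -sum_Vcoord in w1; last exact: (proj1 Kw).
have [y [d [Vy [Hy [Hd dR]]]]] := nu_value_le Kw maxmin_ge0 w1 Hw.
pose sw := \big[Rplus/0]_(i < n) w i.
have isw : 0 <= / sw by apply: Rlt_le; apply: Rinv_0_lt_compat; rewrite /sw; lra.
exists (vscale (/ sw) w), y, d; split; [exact: KcoordZ | split; [|split; [|split]]] => //.
have := dual_norm_inf_Kcoord (KcoordZ isw Kw).
by rewrite /vscale -big_distrr /= Rinv_l //; rewrite /sw; lra.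
Qed.

Lemma rhs_maxmin : RhsMaxMin M C N (minC xs).
Proof.
split.
  have [Mx [nx Nx]] := proj1 (unit_cone_M xs) xs_unit.
  by exists xs; split; [|split; [|split]] => //; exact: minC_spec.
move=> a [x [Mx [nx [Nx Ha]]]]; rewrite (IsMin_unique Ha (minC_spec x)).
by apply: xs_max; apply/unit_cone_M.
Qed.

End MaxMin.

Lemma sup_norm_case : exists r, SigmaIs (Kcoord C) Lp N (@norm_inf n) r /\
  NuIs (Vcoord C) (Kcoord C) Lp N (@norm_inf n) r /\ RhsMaxMin M C N r.
Proof.
have [xs [Hxs Hmax]] := unit_cone_max Lipschitz_minC.
by exists (minC xs); split; [|split]; [exact: sigma_maxmin | exact: nu_maxmin | exact: rhs_maxmin].
Qed.


Lemma norm_1_unitv (j : 'I_n) : norm_1 (unitv j) = 1.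
Proof.
rewrite /norm_1 (Rsum_only (j := j)) /unitv ?eqxx ?Rabs_R1 //.
by move=> i /eqP /negbTE ->; rewrite Rabs_R0.
Qed.

Lemma dual_norm_1_Kcoord u j : Kcoord C u -> C j -> (forall i, C i -> u i <= u j) ->
  DualNormIs (Vcoord C) (@norm_1 n) u (u j).
Proof.
move=> [Vu Ku] Cj Hj; split.
  exists (unitv j); split; first exact: (proj1 (unitv_Kcoord Cj)).
  by rewrite norm_1_unitv dot_unitv.
move=> a [x [Vx [Nx ->]]]; rewrite -[u j]Rmult_1_r -Nx /norm_1 big_distrr.
apply: Rsum_le => i /=; have := Rabs_pos (x i); have := Rle_abs (x i); have := Ku j Cj.
case: (classic (C i)) => Ci; last by rewrite (Vu i Ci); nra.
by have := Hj i Ci; have := Ku i Ci; nra.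
Qed.

Lemma lambda_unitv j x : C j -> Lp x -> Defs.nonneg x -> LambdaIs (Kcoord C) (unitv j) x (x j).
Proof.
move=> Cj Lx nx; split.
  by move=> s [_ Hs]; have := Hs j Cj; rewrite /vsub /vscale /unitv eqxx; lra.
move=> b Hb; apply: Hb; split.
  by move=> i nC; rewrite /vsub /vscale (Lp_V Lx nC) (proj1 (unitv_Kcoord Cj) i nC); ring.
move=> i Ci; rewrite /vsub /vscale /unitv; case: eqP => [->|_]; first lra.
by have := nx i; lra.
Qed.

Section MinMax.
Variable xm : 'I_n -> vec n.
Hypothesis xm_unit : forall j, unit_cone (xm j).
Hypothesis xm_max : forall j y, unit_cone y -> y j <= xm j j.
Variable ist : 'I_n.
Hypothesis C_ist : C ist.
Hypothesis ist_min : forall i, C i -> xm ist ist <= xm i i.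

Lemma coord_le_max_norm j x : Lp x -> Kcoord C x -> x j <= xm j j * N x.
Proof.
move=> Lx Kx; case: (norm_ge0 HN x) => Nx; last first.
  by rewrite (norm_eq0_vzero HN (esym Nx)) norm0 // /vzero; lra.
apply: (homogeneous_le HN (P := fun x => Lp x /\ Kcoord C x) (f := fun y => y j)) => //.
- by move=> t y t0 [Ly Ky]; split; [exact: LpZ | apply: KcoordZ => //; lra].
- by move=> y [Ly Ky] Ny; apply: xm_max.
Qed.

Lemma minmax_ge0 : 0 <= xm ist ist.
Proof. by case: (xm_unit ist) => _ [[_ K] _]; apply: K. Qed.

Lemma sigma_minmax : SigmaIs (Kcoord C) Lp N (@norm_1 n) (xm ist ist).
Proof.
apply: (SigmaIs_intro (v := unitv ist)); [exact: unitv_Kcoord | exact: norm_1_unitv | | |].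
- case: (xm_unit ist) => Lx [Kx Nx].
  by exists (xm ist); split => //; split; [lra | exact: lambda_unitv (Kcoord_nonneg Kx)].
- move=> x b Lx Nx [Hub Hleast].
  case: (classic (exists s, Kcoord C (vsub x (vscale s (unitv ist))))) => [[s [_ Hs]]|Hne]; last first.
    by apply: Hleast => s Hs; case: Hne; exists s.
  have bx : b <= x ist.
    by apply: Hleast => t [_ Ht]; have := Ht ist C_ist; rewrite /vsub /vscale /unitv eqxx; lra.
  case: (Rle_or_lt (x ist) 0) => hx; first by have := minmax_ge0; lra.
  have Kx : Kcoord C x.
    split; first exact: Lp_V.
    by move=> i Ci; have := Hs i Ci; rewrite /vsub /vscale /unitv; case: eqP => [->|_]; lra.
  by have := coord_le_max_norm ist Lx Kx; have := minmax_ge0; nra.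
- move=> v Kv Nv; have nv := Kcoord_nonneg Kv.
  have Sv : \big[Rplus/0]_(i < n) v i = 1.
    by rewrite -Nv /norm_1; apply: eq_bigr => i _; rewrite Rabs_pos_eq.
  pose x := vsum (index_enum 'I_n) (fun j => vscale (v j) (xm j)).
  have Lx : Lp x by apply: Lp_vsum => k; apply: LpZ; case: (xm_unit k).
  have Nx : N x <= 1.
    apply: Rle_trans (norm_vsum HN _ _) _; rewrite -Sv; apply: Rsum_le => j.
    by rewrite normZ // Rabs_pos_eq //; case: (xm_unit j) => _ [_ ->]; lra.
  have [j [Cj vj]] : exists j, C j /\ 0 < v j by apply: (Kcoord_pos_coord (norm_1_IsNorm n) Kv); rewrite Nv; lra.
  have xmK : forall k i, 0 <= xm k i by move=> k; case: (xm_unit k) => _ [K _]; exact: Kcoord_nonneg.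
  have [b [Hb Rbb]] : exists b, LambdaIs (Kcoord C) v x b /\ xm ist ist <= b.
    apply: lambda_exists_ge; last by exists j.
    split.
      move=> i nC; rewrite /vsub /vscale /x /vsum (proj1 Kv i nC) big1; first ring.
      by move=> k _; case: (xm_unit k) => Lk _; rewrite /vscale (Lp_V Lk nC); ring.
    move=> i Ci; rewrite /vsub /vscale (_ : x i = \big[Rplus/0]_(k < n) (v k * xm k i)) //.
    have := Rsum_ge_term (F := fun k => v k * xm k i) i (fun k => Rmult_le_pos _ _ (nv k) (xmK k i)).
    by have := ist_min Ci; have := nv i; nra.
  by exists x, b.
Qed.

Lemma nu_minmax : NuIs (Vcoord C) (Kcoord C) Lp N (@norm_1 n) (xm ist ist).
Proof.
apply: NuIs_intro.
  move=> u y a Ku Hy Hu.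
  have [j [Cj Hj]] := exists_max_on Ci0 u.
  have uj := IsMax_unique Hu (dual_norm_1_Kcoord Ku Cj Hj).
  case: (xm_unit j) => Lj [Kj Nj]; apply: (nu_value_ge Lj Nj _ Hy).
  have := Rsum_ge_term (F := fun k => u k * xm j k) j
    (fun k => Rmult_le_pos _ _ (Kcoord_nonneg Ku k) (Kcoord_nonneg Kj k)).
  by rewrite -/(dot u (xm j)) -uj Rmult_1_l; have := ist_min Cj; lra.
have [w [Kw [w1 Hw]]] : exists w, Kcoord C w /\ 1 <= dot w (unitv ist) /\
    forall x, Lp x -> dot w x <= xm ist ist * N x.
  apply: separation_certificate; [exact: (proj1 (unitv_Kcoord C_ist)) | exact: minmax_ge0 |].
  move=> x s Lx s0 Hs.
  have Kx : Kcoord C x.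
    split; first exact: Lp_V.
    by move=> i Ci; have := Hs i Ci; rewrite /unitv; case: (i == ist); lra.
  apply: Rle_trans (coord_le_max_norm ist Lx Kx).
  by have := Hs ist C_ist; rewrite /unitv eqxx; lra.
rewrite dot_unitv in w1.
have [jm [Cjm Hjm]] := exists_max_on Ci0 w.
have mu1 : 1 <= w jm by have := Hjm ist C_ist; lra.
have [y [d [Vy [Hy [Hd dR]]]]] := nu_value_le Kw minmax_ge0 mu1 Hw.
have iw : 0 < / w jm by apply: Rinv_0_lt_compat; lra.
exists (vscale (/ w jm) w), y, d.
split; first by apply: KcoordZ => //; lra.
split=> //; split=> //; split=> //.
have := dual_norm_1_Kcoord (KcoordZ (Rlt_le _ _ iw) Kw) Cjm.
rewrite /vscale Rinv_l; last lra.
apply=> i Ci; rewrite -(Rinv_l (w jm)); last lra.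
by apply: Rmult_le_compat_l; [lra | exact: Hjm].
Qed.

Lemma rhs_minmax : RhsMinMax M C N (xm ist ist).
Proof.
have Mi : forall i, C i ->
    IsMax (fun b => exists x, M x /\ Defs.nonneg x /\ N x = 1 /\ b = x i) (xm i i).
  move=> i Ci; split.
    by have [Mx [nx Nx]] := proj1 (unit_cone_M (xm i)) (xm_unit i); exists (xm i).
  by move=> b [x [Mx [nx [Nx ->]]]]; apply: xm_max; apply/unit_cone_M.
split; first by exists ist; split => //; exact: Mi.
by move=> a [i [Ci Ha]]; rewrite (IsMax_unique Ha (Mi i Ci)); exact: ist_min.
Qed.

End MinMax.

Lemma l1_norm_case : exists r, SigmaIs (Kcoord C) Lp N (@norm_1 n) r /\
  NuIs (Vcoord C) (Kcoord C) Lp N (@norm_1 n) r /\ RhsMinMax M C N r.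
Proof.
have Hex : forall j, exists x, unit_cone x /\ forall y, unit_cone y -> y j <= x j.
  by move=> j; apply: unit_cone_max; exact: Lipschitz_coord.
pose xm := fun j => proj1_sig (constructive_indefinite_description _ (Hex j)).
have Hxm : forall j, unit_cone (xm j) /\ forall y, unit_cone y -> y j <= xm j j.
  by move=> j; rewrite /xm; case: constructive_indefinite_description.
have [ist [Cist Hist]] := exists_min_on Ci0 (fun j => xm j j).
have xm_unit j : unit_cone (xm j) by case: (Hxm j).
have xm_max j : forall y, unit_cone y -> y j <= xm j j by case: (Hxm j).
have Hmin : forall i, C i -> xm ist ist <= xm i i by [].
have := sigma_minmax xm_unit xm_max Cist Hmin; have := nu_minmax xm_unit xm_max Cist Hmin.
have := rhs_minmax xm_unit xm_max Cist Hmin.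
by exists (xm ist ist).
Qed.


Lemma dot_p_gt0 u : Kcoord C u -> 0 < N u -> 0 < dot u p.
Proof.
move=> Ku Nu; have [j [Cj uj]] := Kcoord_pos_coord HN Ku Nu.
have hnn : forall k, 0 <= u k * p k.
  move=> k; case: (classic (C k)) => Ck; last by rewrite (proj1 Ku k Ck); lra.
  by apply: Rmult_le_pos; [exact: (proj2 Ku) | apply: Rlt_le; exact: p_pos].
by have := Rsum_ge_term j hnn; rewrite -/(dot u p); have := p_pos Cj; nra.
Qed.

Lemma dominating_min_norm v : exists xm, Lp xm /\ (forall i, C i -> v i <= xm i) /\
  forall x, Lp x -> (forall i, C i -> v i <= x i) -> N xm <= N x.
Proof.
have [t Ht] := dominated_by_p v.
pose F := fun x => Lp x /\ (forall i, C i -> v i <= x i) /\ N x <= N (vscale t p).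
have F0 : F (vscale t p) by split; [exact: LpZ | split; [exact: Ht | lra]].
have [xm [[Lxm [Hxm _]] Hmin]] : exists x, F x /\ forall y, F y -> N x <= N y.
  apply: Lipschitz_min_attained; [by exists (vscale t p) | | | exact: Lipschitz_norm].
  - have [Mb HMb] := norm_ball_bounded HN i0 (N (vscale t p)).
    by exists Mb => x [_ [_ Nx]]; apply: HMb.
  - apply: approx_closed_and => //; apply: approx_closed_and.
      apply: approx_closed_all => i; apply: approx_closed_imp.
      by apply: approx_closed_le; [exact: Lipschitz_const | exact: Lipschitz_coord].
    by apply: approx_closed_le; [exact: Lipschitz_norm | exact: Lipschitz_const].
exists xm; split => //; split => // x Lx Hx.
case: (Rle_or_lt (N x) (N (vscale t p))) => h; first by apply: Hmin.
by have := Hmin _ F0; lra.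
Qed.

Section Euclidean.
Hypothesis HN2 : forall x, N x = norm_2 x.

Lemma dot_self x : dot x x = N x * N x.
Proof. by rewrite HN2 norm_2_sq. Qed.

Lemma cauchy_schwarz_N x y : dot x y <= N x * N y.
Proof. by rewrite !HN2; exact: cauchy_schwarz. Qed.

Lemma dual_norm_2 w : Vcoord C w -> DualNormIs (Vcoord C) N w (N w).
Proof.
move=> Vw; split; last by move=> a [x [Vx [Nx ->]]]; have := cauchy_schwarz_N w x; rewrite Nx; lra.
case: (norm_ge0 HN w) => Nw; last first.
  have [x [Vx Nx]] := Vcoord_unit HN Ci0; exists x; split => //; split => //.
  by rewrite (norm_eq0_vzero HN (esym Nw)) dot0l norm0.
exists (vscale (/ N w) w); split; first exact: Vcoord_vscale.
by split; [exact: norm_normalize | rewrite dotZr dot_self; field; lra].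
Qed.

Lemma support_exists u : exists m, IsMax (fun b => exists x, (Lp x /\ N x <= 1) /\ b = dot u x) m.
Proof.
have [Mb HMb] := norm_ball_bounded HN i0 1.
have [x [Yx Hx]] : exists x, (Lp x /\ N x <= 1) /\ forall y, Lp y /\ N y <= 1 -> dot u y <= dot u x.
  apply: Lipschitz_max_attained; last exact: Lipschitz_dot.
  - by exists (@vzero n); split => //; rewrite norm0 //; lra.
  - by exists Mb => x [_ Nx]; apply: HMb.
  - by apply: approx_closed_and => //; apply: approx_closed_le; [exact: Lipschitz_norm | exact: Lipschitz_const].
by exists (dot u x); split; [exists x | move=> b [y [Yy ->]]; apply: Hx].
Qed.

(* the support function of the unit ball of [L'] *)
Definition support u : R := proj1_sig (constructive_indefinite_description _ (support_exists u)).

Lemma support_spec u : IsMax (fun b => exists x, (Lp x /\ N x <= 1) /\ b = dot u x) (support u).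
Proof. by rewrite /support; case: constructive_indefinite_description. Qed.

Lemma dot_le_support u x : Lp x -> N x <= 1 -> dot u x <= support u.
Proof. by move=> Lx Nx; case: (support_spec u) => _; apply; exists x. Qed.

Lemma support_ge0 u : 0 <= support u.
Proof. by have := dot_le_support u Lp0; rewrite dot0r norm0 //; apply; lra. Qed.

Lemma dot_le_support_norm u x : Lp x -> dot u x <= support u * N x.
Proof.
move=> Lx; case: (norm_ge0 HN x) => Nx; last first.
  by rewrite (norm_eq0_vzero HN (esym Nx)) dot0r norm0 //; lra.
apply: (homogeneous_le HN (P := Lp)) => //; first by move=> t y _; exact: LpZ.
- by move=> t y _; rewrite dotZr.
- by move=> y Ly Ny; apply: dot_le_support => //; lra.
Qed.

Lemma Lipschitz_support : Lipschitz support.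
Proof.
have [Mb HMb] := norm_ball_bounded HN i0 1.
exists (\big[Rplus/0]_(i < n) Mb) => u u' d d0 H.
have key : forall a b, (forall i, Rabs (b i - a i) <= d) ->
    support a - (\big[Rplus/0]_(i < n) Mb) * d <= support b.
  move=> a b Hab; case: (support_spec a) => [[x [[Lx Nx] ->]] _].
  have := dot_le_support b Lx Nx.
  have : dot a x - dot b x <= (\big[Rplus/0]_(i < n) Mb) * d.
    rewrite -dotBl big_distrl; apply: Rsum_le => i /=.
    rewrite /vsub; have := Rle_abs ((a i - b i) * x i); rewrite Rabs_mult.
    have := HMb x Nx i; have := Hab i; rewrite Rabs_minus_sym.
    by have := Rabs_pos (a i - b i); have := Rabs_pos (x i); nra.
  lra.
have := key u u' H; have := key u' u (fun i => ltac:(rewrite Rabs_minus_sym; exact: H)).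
by move=> h1 h2; apply: Rabs_le; lra.
Qed.

Section Minimizer.
Variable us : vec n.
Hypothesis us_K : Kcoord C us.
Hypothesis us_unit : N us = 1.
Hypothesis us_min : forall v, Kcoord C v -> N v = 1 -> support us <= support v.

Lemma support_us_gt0 : 0 < support us.
Proof.
have Np : 0 < N p by apply: (norm_gt0 HN (i := i0)); have := p_pos Ci0; lra.
have := dot_le_support us (LpZ (/ N p) Lp_p) (Req_le _ _ (norm_normalize HN Np)).
rewrite dotZr; have := dot_p_gt0 us_K ltac:(lra); have := Rinv_0_lt_compat _ Np; nra.
Qed.

Lemma dominating_point v : Kcoord C v -> N v = 1 ->
  exists x, Lp x /\ N x <= 1 /\ forall i, C i -> support us * v i <= x i.
Proof.
move=> Kv Nv; have [xm [Lxm [Hxm Hmin]]] := dominating_min_norm v.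
have [j [Cj vj]] := Kcoord_pos_coord HN Kv ltac:(lra).
have mu0 : 0 < N xm by apply: (norm_gt0 HN (i := j)); have := Hxm j Cj; lra.
have [w [Kw [w1 Hw]]] : exists w, Kcoord C w /\ 1 <= dot w v /\
    forall x, Lp x -> dot w x <= / N xm * N x.
  apply: separation_certificate; [exact: (proj1 Kv) | by apply: Rlt_le; apply: Rinv_0_lt_compat |].
  move=> x s Lx s0 Hs; have is0 : 0 < / s by apply: Rinv_0_lt_compat.
  have Hx : forall i, C i -> v i <= vscale (/ s) x i.
    move=> i Ci; rewrite /vscale; apply: (Rmult_le_reg_l s) => //.
    by rewrite -Rmult_assoc Rinv_r; [have := Hs i Ci; lra | lra].
  have := Hmin _ (LpZ (/ s) Lx) Hx; rewrite normZ // Rabs_pos_eq; last lra.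
  move=> h; have := Rmult_le_compat_l s _ _ (Rlt_le _ _ s0) h.
  rewrite -Rmult_assoc Rinv_r; last lra.
  move=> h2; apply: (Rmult_le_reg_l (N xm)) => //.
  by rewrite -Rmult_assoc Rinv_r; lra.
have Nw : 1 <= N w by have := cauchy_schwarz_N w v; rewrite Nv; lra.
have iw : 0 < / N w by apply: Rinv_0_lt_compat; lra.
have nu_mu : support us * N xm <= 1.
  have := us_min (KcoordZ (Rlt_le _ _ iw) Kw) (norm_normalize HN (Rlt_le_trans _ _ _ Rlt_0_1 Nw)).
  case: (support_spec (vscale (/ N w) w)) => [[x [[Lx Nx] ->]] _].
  rewrite dotZl => h; have hw := Hw x Lx.
  have imu := Rinv_0_lt_compat _ mu0.
  have d1 : dot w x <= / N xm.
    by apply: Rle_trans hw _; rewrite -[X in _ <= X]Rmult_1_r; apply: Rmult_le_compat_l; lra.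
  have : / N w * dot w x <= / N xm.
    have : / N w <= 1 by rewrite -Rinv_1; apply: Rinv_le_contravar; lra.
    by case: (Rle_or_lt 0 (dot w x)) => hd; nra.
  move=> h2; have := Rmult_le_compat_r (N xm) _ _ (Rlt_le _ _ mu0) (Rle_trans _ _ _ h h2).
  by rewrite Rinv_l; lra.
have nu0 := support_ge0 us.
exists (vscale (support us) xm); split; first exact: LpZ.
split; first by rewrite normZ // Rabs_pos_eq.
by move=> i Ci; rewrite /vscale; apply: Rmult_le_compat_l => //; exact: Hxm.
Qed.


Lemma lambda_ge_support v : Kcoord C v -> N v = 1 ->
  exists x b, Lp x /\ N x <= 1 /\ LambdaIs (Kcoord C) v x b /\ support us <= b.
Proof.
move=> Kv Nv; have [x [Lx [Nx Hx]]] := dominating_point Kv Nv.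
have [b [Hb nub]] : exists b, LambdaIs (Kcoord C) v x b /\ support us <= b.
  apply: lambda_exists_ge; last by apply: (Kcoord_pos_coord HN Kv); lra.
  split; first by move=> i nC; rewrite /vsub /vscale (Lp_V Lx nC) (proj1 Kv i nC); ring.
  by move=> i Ci; rewrite /vsub /vscale; have := Hx i Ci; lra.
by exists x, b.
Qed.

(* Pairing with [us] itself: [<us, x - s us> >= 0] forces [s <= <us, x>]. *)
Lemma lambda_us_le x b : Lp x -> N x <= 1 -> LambdaIs (Kcoord C) us x b -> b <= support us.
Proof.
move=> Lx Nx [_ H]; apply: H => s Ks.
have := dot_nonneg (Kcoord_nonneg us_K) (Kcoord_nonneg Ks).
rewrite dotBr dotZr dot_self us_unit.
by have := dot_le_support_norm us Lx; have := support_ge0 us; have := norm_ge0 HN x; nra.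
Qed.

Lemma unit_point_ge_support v : Kcoord C v -> N v = 1 ->
  exists x, M x /\ Defs.nonneg x /\ N x = 1 /\ support us <= dot v x.
Proof.
move=> Kv Nv; have [x [Lx [Nx Hx]]] := dominating_point Kv Nv.
have nu0 := support_ge0 us.
have dvx : support us <= dot v x.
  have Kd : Kcoord C (vsub x (vscale (support us) v)).
    split; first by move=> i nC; rewrite /vsub /vscale (Lp_V Lx nC) (proj1 Kv i nC); ring.
    by move=> i Ci; rewrite /vsub /vscale; have := Hx i Ci; lra.
  have := dot_nonneg (Kcoord_nonneg Kv) (Kcoord_nonneg Kd).
  by rewrite dotBr dotZr dot_self Nv; lra.
have Kx : Kcoord C x.
  split; first exact: Lp_V.
  by move=> i Ci; have := Hx i Ci; have := proj2 Kv i Ci; nra.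
have Nx0 : 0 < N x.
  case: (norm_ge0 HN x) => // h; move: dvx.
  by rewrite (norm_eq0_vzero HN (esym h)) dot0r; have := support_us_gt0; lra.
have /unit_cone_M [Mx' [nx' Nx']] := unit_cone_normalize Lx Kx Nx0.
exists (vscale (/ N x) x); do 3!split => //.
rewrite dotZr; have : 1 <= / N x by rewrite -Rinv_1; apply: Rinv_le_contravar.
have := dot_nonneg (Kcoord_nonneg Kv) (Kcoord_nonneg Kx); nra.
Qed.

Lemma sigma_l2 : SigmaIs (Kcoord C) Lp N N (support us).
Proof.
apply: (SigmaIs_intro us_K us_unit); last exact: lambda_ge_support.
  have [x [b [Lx [Nx [Hb nub]]]]] := lambda_ge_support us_K us_unit.
  exists x; do 2!split => //.
  suff -> : support us = b by [].
  by apply: Rle_antisym => //; apply: lambda_us_le Hb.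
by move=> x b Lx Nx; apply: lambda_us_le.
Qed.

Lemma nu_l2 : NuIs (Vcoord C) (Kcoord C) Lp N N (support us).
Proof.
apply: NuIs_intro.
  move=> u y a Ku Hy Hu Ha.
  have Nu : N u = 1 by rewrite (IsMax_unique Hu (dual_norm_2 (proj1 Ku))).
  apply: Rle_trans (us_min Ku Nu) _.
  case: (support_spec u) => [[x [[Lx Nx] ->]] _].
  have := dual_norm_le HN Ha (Lp_V Lx); rewrite dotBl (dotC y x) (Hy _ Lx).
  by have := dual_norm_ge0 HN Ci0 Ha; have := norm_ge0 HN x; nra.
have [y [d [Vy [Hy [Hd dR]]]]] :=
  nu_value_le us_K (support_ge0 us) (Rle_refl 1) (fun x Lx => dot_le_support_norm us Lx).
rewrite (_ : vscale (/ 1) us = us) in Hd; last by apply: vec_ext => i; rewrite /vscale Rinv_1; ring.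
exists us, y, d; split => //; split => //; split => //; split => //.
by have := dual_norm_2 (proj1 us_K); rewrite us_unit.
Qed.

Lemma rhs_l2 : IsMin (fun a => exists u, Kcoord C u /\ N u = 1 /\
  IsMax (fun b => exists x, M x /\ Defs.nonneg x /\ N x = 1 /\ b = dot u x) a) (support us).
Proof.
have le_nu : forall x, M x -> Defs.nonneg x -> N x = 1 -> dot us x <= support us.
  move=> x Mx nx Nx; have [Lx _] := proj1 (HM x) (conj Mx nx).
  by have := dot_le_support_norm us Lx; rewrite Nx; lra.
split.
  exists us; do 2!split => //; split.
    have [x [Mx [nx [Nx Hx]]]] := unit_point_ge_support us_K us_unit.
    by exists x; do 3!split => //; apply: Rle_antisym => //; apply: le_nu.
  by move=> b [x [Mx [nx [Nx ->]]]]; apply: le_nu.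
move=> a [u [Ku [Nu Ha]]]; have [x [Mx [nx [Nx Hx]]]] := unit_point_ge_support Ku Nu.
have : dot u x <= a by apply: (proj2 Ha); exists x.
lra.
Qed.

End Minimizer.

Lemma l2_norm_case : exists r, SigmaIs (Kcoord C) Lp N N r /\
  NuIs (Vcoord C) (Kcoord C) Lp N N r /\
  IsMin (fun a => exists u, Kcoord C u /\ N u = 1 /\
    IsMax (fun b => exists x, M x /\ Defs.nonneg x /\ N x = 1 /\ b = dot u x) a) r.
Proof.
have [us [[Kus Nus] Hus]] : exists u, (Kcoord C u /\ N u = 1) /\
    forall v, Kcoord C v /\ N v = 1 -> support u <= support v.
  apply: Lipschitz_min_attained; last exact: Lipschitz_support.
  - have Ni : 0 < N indC by apply: (norm_gt0 HN (i := i0)); rewrite indC_C //; lra.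
    exists (vscale (/ N indC) indC); split; last exact: norm_normalize.
    by apply: KcoordZ; [apply: Rlt_le; apply: Rinv_0_lt_compat | exact: indC_Kcoord].
  - by have [Mb HMb] := norm_ball_bounded HN i0 1; exists Mb => u [_ Nu]; apply: HMb; lra.
  - apply: approx_closed_and; first exact: Kcoord_approx_closed.
    by apply: approx_closed_eq; [exact: Lipschitz_norm | exact: Lipschitz_const].
have Hmin : forall v, Kcoord C v -> N v = 1 -> support us <= support v by move=> v Kv Nv; apply: Hus.
exists (support us); split; first exact: sigma_l2 Kus Nus Hmin.
by split; [exact: nu_l2 Kus Nus Hmin | exact: rhs_l2 Kus Nus Hmin].
Qed.

End Euclidean.
End Side.

Section Simplex.
Variables (n : nat) (M : vec n -> Prop) (C : 'I_n -> Prop).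

Lemma nonneg_norm_1_simplex (x : vec n) : Defs.nonneg x /\ norm_1 x = 1 <-> simplex x.
Proof.
have E : Defs.nonneg x -> norm_1 x = \big[Rplus/0]_(i < n) x i.
  by move=> nx; apply: eq_bigr => i _; rewrite Rabs_pos_eq.
by split=> [[nx Nx]|[nx Sx]]; split => //; rewrite -?Nx -?Sx E.
Qed.

Lemma RhsMaxMin_simplex r : RhsMaxMin M C (@norm_1 n) r -> RhsMaxMinSimplex M C r.
Proof.
apply: IsMax_ext => a; split=> [[x [Mx [nx [Nx H]]]]|[x [Mx [/nonneg_norm_1_simplex [nx Nx] H]]]].
  by exists x; split => //; split => //; apply/nonneg_norm_1_simplex.
by exists x.
Qed.

Lemma RhsMinMax_simplex r : RhsMinMax M C (@norm_1 n) r -> RhsMinMaxSimplex M C r.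
Proof.
apply: IsMin_ext => a; split=> [] [i [Ci H]]; exists i; split => //; apply: IsMax_ext H => b.
  split=> [[x [Mx [nx [Nx ->]]]]|[x [Mx [/nonneg_norm_1_simplex [nx Nx] ->]]]]; exists x => //.
  by split => //; split => //; apply/nonneg_norm_1_simplex.
split=> [[x [Mx [/nonneg_norm_1_simplex [nx Nx] ->]]]|[x [Mx [nx [Nx ->]]]]]; exists x => //.
by split => //; split => //; apply/nonneg_norm_1_simplex.
Qed.

End Simplex.

Lemma side_characterization (n : nat) (C : 'I_n -> Prop) (Lp M : vec n -> Prop) (p : vec n) :
  (exists i, C i) -> is_subspace Lp -> (forall x, Lp x -> Vcoord C x) -> approx_closed Lp ->
  Lp p -> (forall i, C i -> 0 < p i) ->
  (forall x, M x /\ Defs.nonneg x <-> Lp x /\ Defs.nonneg x) ->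
  (forall Nn, IsNorm Nn -> exists r,
     SigmaIs (Kcoord C) Lp Nn (@norm_inf n) r /\ NuIs (Vcoord C) (Kcoord C) Lp Nn (@norm_inf n) r /\
     RhsMaxMin M C Nn r) /\
  (exists r, SigmaIs (Kcoord C) Lp (@norm_1 n) (@norm_inf n) r /\
     NuIs (Vcoord C) (Kcoord C) Lp (@norm_1 n) (@norm_inf n) r /\ RhsMaxMinSimplex M C r) /\
  (forall Nn, IsNorm Nn -> exists r,
     SigmaIs (Kcoord C) Lp Nn (@norm_1 n) r /\ NuIs (Vcoord C) (Kcoord C) Lp Nn (@norm_1 n) r /\
     RhsMinMax M C Nn r) /\
  (exists r, SigmaIs (Kcoord C) Lp (@norm_1 n) (@norm_1 n) r /\
     NuIs (Vcoord C) (Kcoord C) Lp (@norm_1 n) (@norm_1 n) r /\ RhsMinMaxSimplex M C r) /\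
  (exists r, SigmaIs (Kcoord C) Lp (@norm_2 n) (@norm_2 n) r /\
     NuIs (Vcoord C) (Kcoord C) Lp (@norm_2 n) (@norm_2 n) r /\ RhsL2 M C r).
Proof.
move=> [i0 Ci0] Lsub LV Lcl Lp_p ppos HM.
have supc Nn (HNn : IsNorm Nn) := sup_norm_case HNn Ci0 Lsub LV Lcl Lp_p ppos HM.
have l1c Nn (HNn : IsNorm Nn) := l1_norm_case HNn Ci0 Lsub LV Lcl Lp_p ppos HM.
split; first exact: supc.
split; first by have [r [H1 [H2 /RhsMaxMin_simplex H3]]] := supc _ (norm_1_IsNorm n); exists r.
split; first exact: l1c.
split; first by have [r [H1 [H2 /RhsMinMax_simplex H3]]] := l1c _ (norm_1_IsNorm n); exists r.
have [r Hr] := l2_norm_case (norm_2_IsNorm n) Ci0 Lsub LV Lcl Lp_p ppos HM (fun x => erefl).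
by exists r.
Qed.

Section GoldmanTuckerSides.
Variables (n : nat) (L : vec n -> Prop) (B : 'I_n -> Prop).
Hypothesis GT : GoldmanTucker L B.

Lemma GoldmanTucker_nonneg_L x : L x /\ Defs.nonneg x <-> LB L B x /\ Defs.nonneg x.
Proof.
case: GT => _ [y [Py Hy]]; split=> [[Lx nx]|[[Lx _] nx]] //; split => //; split => // i nB.
have ny : Defs.nonneg y.
  by move=> k; case: (classic (B k)) => Bk; [rewrite (proj1 (Hy k) Bk); lra | have := proj2 (Hy k) Bk; lra].
exact: dot_nonneg_eq0 nx ny (Py _ Lx) i (proj2 (Hy i) nB).
Qed.

Lemma GoldmanTucker_nonneg_perp x : perp L x /\ Defs.nonneg x <-> LN L B x /\ Defs.nonneg x.
Proof.
case: GT => [[z [Lz Hz]] _]; split=> [[Px nx]|[[Px _] nx]] //; split => //; split => // i nnB.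
have Bi : B i by apply: NNPP.
have nz : Defs.nonneg z.
  by move=> k; case: (classic (B k)) => Bk; [have := proj1 (Hz k) Bk; lra | rewrite (proj2 (Hz k) Bk); lra].
by apply: (dot_nonneg_eq0 nx nz) (proj1 (Hz i) Bi); rewrite dotC; apply: Px.
Qed.

End GoldmanTuckerSides.
Theorem mainTheorem15 (n m : nat) (L : vec n -> Prop) (B : 'I_n -> Prop) :
  (1 <= m)%N -> (m < n)%N -> InGr L m -> GoldmanTucker L B ->
  (* (a) |||.||| = ||.||_inf *)
  ((forall Nn : vec n -> R, IsNorm Nn ->
     ((exists i, B i) -> exists r,
        SigmaIs (Kcoord B) (LB L B) Nn (@norm_inf n) r /\
        NuIs (Vcoord B) (Kcoord B) (LB L B) Nn (@norm_inf n) r /\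
        RhsMaxMin L B Nn r) /\
     ((exists i, ~ B i) -> exists r,
        SigmaIs (Kcoord (compl B)) (LN L B) Nn (@norm_inf n) r /\
        NuIs (Vcoord (compl B)) (Kcoord (compl B)) (LN L B) Nn (@norm_inf n) r /\
        RhsMaxMin (perp L) (compl B) Nn r)) /\
   ((exists i, B i) -> exists r,
        SigmaIs (Kcoord B) (LB L B) (@norm_1 n) (@norm_inf n) r /\
        NuIs (Vcoord B) (Kcoord B) (LB L B) (@norm_1 n) (@norm_inf n) r /\
        RhsMaxMinSimplex L B r) /\
   ((exists i, ~ B i) -> exists r,
        SigmaIs (Kcoord (compl B)) (LN L B) (@norm_1 n) (@norm_inf n) r /\
        NuIs (Vcoord (compl B)) (Kcoord (compl B)) (LN L B) (@norm_1 n) (@norm_inf n) r /\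
        RhsMaxMinSimplex (perp L) (compl B) r)) /\
  (* (b) |||.||| = ||.||_1 *)
  ((forall Nn : vec n -> R, IsNorm Nn ->
     ((exists i, B i) -> exists r,
        SigmaIs (Kcoord B) (LB L B) Nn (@norm_1 n) r /\
        NuIs (Vcoord B) (Kcoord B) (LB L B) Nn (@norm_1 n) r /\
        RhsMinMax L B Nn r) /\
     ((exists i, ~ B i) -> exists r,
        SigmaIs (Kcoord (compl B)) (LN L B) Nn (@norm_1 n) r /\
        NuIs (Vcoord (compl B)) (Kcoord (compl B)) (LN L B) Nn (@norm_1 n) r /\
        RhsMinMax (perp L) (compl B) Nn r)) /\
   ((exists i, B i) -> exists r,
        SigmaIs (Kcoord B) (LB L B) (@norm_1 n) (@norm_1 n) r /\
        NuIs (Vcoord B) (Kcoord B) (LB L B) (@norm_1 n) (@norm_1 n) r /\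
        RhsMinMaxSimplex L B r) /\
   ((exists i, ~ B i) -> exists r,
        SigmaIs (Kcoord (compl B)) (LN L B) (@norm_1 n) (@norm_1 n) r /\
        NuIs (Vcoord (compl B)) (Kcoord (compl B)) (LN L B) (@norm_1 n) (@norm_1 n) r /\
        RhsMinMaxSimplex (perp L) (compl B) r)) /\
  (* (c) ||.|| = |||.||| = ||.||_2 *)
  (((exists i, B i) -> exists r,
        SigmaIs (Kcoord B) (LB L B) (@norm_2 n) (@norm_2 n) r /\
        NuIs (Vcoord B) (Kcoord B) (LB L B) (@norm_2 n) (@norm_2 n) r /\
        RhsL2 L B r) /\
   ((exists i, ~ B i) -> exists r,
        SigmaIs (Kcoord (compl B)) (LN L B) (@norm_2 n) (@norm_2 n) r /\
        NuIs (Vcoord (compl B)) (Kcoord (compl B)) (LN L B) (@norm_2 n) (@norm_2 n) r /\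
        RhsL2 (perp L) (compl B) r)).
Proof.
move=> m1 _ HGr GT.
have Lsub := InGr_subspace HGr; have Lcl := InGr_approx_closed m1 HGr.
case: (GT) => [[x [Lx Hx]] [y [Py Hy]]].
have SB := fun hB : exists i, B i => side_characterization hB
  (subspace_Vcoord B Lsub) (fun _ => @proj2 _ _) (approx_closed_and Lcl (Vcoord_approx_closed (C := B)))
  (conj Lx (fun i nB => proj2 (Hx i) nB)) (fun i Bi => proj1 (Hx i) Bi) (GoldmanTucker_nonneg_L GT).
have SN := fun hN : exists i, compl B i => side_characterization hN
  (subspace_Vcoord (compl B) (perp_subspace L)) (fun _ => @proj2 _ _)
  (approx_closed_and (perp_approx_closed (L := L)) (Vcoord_approx_closed (C := compl B)))
  (conj Py (fun i nnB => proj1 (Hy i) (NNPP _ nnB))) (fun i nB => proj2 (Hy i) nB)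
  (GoldmanTucker_nonneg_perp GT).
split; [|split]; [split; [|split] | split; [|split] | split].
- by move=> Nn HNn; split=> [/SB [H _]|/SN [H _]]; apply: H.
- by move=> /SB [_ [H _]].
- by move=> /SN [_ [H _]].
- by move=> Nn HNn; split=> [/SB [_ [_ [H _]]]|/SN [_ [_ [H _]]]]; apply: H.
- by move=> /SB [_ [_ [_ [H _]]]].
- by move=> /SN [_ [_ [_ [H _]]]].
- by move=> /SB [_ [_ [_ [_ H]]]].
- by move=> /SN [_ [_ [_ [_ H]]]].
Qed.
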